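(* Let $\sigma_0,\sigma_\epsilon>0$, $\theta_0\in\mathbb{R}$, prior $\Theta\sim\mathrm{Laplace}(\theta_0,\sigma_0)$, signal $X=\Theta+\epsilon$ with $\epsilon\sim\mathrm{Cauchy}(0,\sigma_\epsilon)$ independent of $\Theta$, and let $\theta_1(x)=\mathbb{E}[\Theta\mid X=x]$. With $a=\sigma_\epsilon/\sigma_0$, the DeGroot coefficient $\omega=\frac{d\theta_1}{dx}\big|_{x=\theta_0}$ is $$\omega=1-a\cdot\frac{\frac{\pi}{2}\sin a-\cos a\,\mathrm{Ci}(a)-\sin a\,\mathrm{Si}(a)}{\frac{\pi}{2}\cos a-\cos a\,\mathrm{Si}(a)+\sin a\,\mathrm{Ci}(a)},$$ where $\mathrm{Si}(a)=\int_0^a\frac{\sin t}{t}dt$, $\mathrm{Ci}(a)=\gamma+\log a+\int_0^a\frac{\cos t-1}{t}dt$, and $\gamma$ is Euler's constant.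
   Context: $\mathrm{Laplace}(\mu,s)$ has density $t\mapsto\frac{1}{2s}e^{-|t-\mu|/s}$; $\mathrm{Cauchy}(\mu,s)$ has density $t\mapsto\frac{1}{\pi s[1+((t-\mu)/s)^2]}$. The posterior mean is $\theta_1(x)=\frac{\int\theta f_\Theta(\theta)l_\epsilon(x-\theta)d\theta}{\int f_\Theta(\theta)l_\epsilon(x-\theta)d\theta}$. *)

From Stdlib Require Import Reals.
From Coquelicot Require Import Coquelicot.
Open Scope R_scope.

Definition laplace_pdf (mu s t : R) : R := / (2 * s) * exp (- Rabs (t - mu) / s).

Definition cauchy_pdf (mu s t : R) : R := / (PI * s * (1 + ((t - mu) / s) ^ 2)).

Definition int_R (f : R -> R) : R :=
  RInt_gen f (Rbar_locally m_infty) (Rbar_locally p_infty).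

Definition posterior_mean (fTheta leps : R -> R) (x : R) : R :=
  int_R (fun th => th * fTheta th * leps (x - th)) /
  int_R (fun th => fTheta th * leps (x - th)).

Definition harmonic (n : nat) : R := sum_f_R0 (fun k => / INR (S k)) (pred n).
Definition euler_gamma : R :=
  real (Lim_seq (fun n => harmonic (S n) - ln (INR (S n)))).

(* Integrands, extended continuously at 0. *)
Definition sinc (t : R) : R := if Req_EM_T t 0 then 1 else sin t / t.
Definition cosm1_div (t : R) : R := if Req_EM_T t 0 then 0 else (cos t - 1) / t.

Definition SinInt (a : R) : R := RInt sinc 0 a.
Definition CosInt (a : R) : R := euler_gamma + ln a + RInt cosm1_div 0 a.

(* Write y = x - theta0.  Folding the posterior integrals onto [0, oo) gives
   theta1 x = theta0 + B y / A y with B 0 = 0, so omega = B'(0) / A(0).  The substitution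
   u = sigma_eps v turns A(0) and B'(0) into (F a) / (pi sigma0) and (F a - a G a) / (pi sigma0),
   where F a = int_0^oo e^(-av) / (1 + v^2) dv and G a = int_0^oo v e^(-av) / (1 + v^2) dv,
   so omega = 1 - a G a / F a.
   Both (F, G) and the closed forms (f, g) of the statement satisfy F' = -G, G' = F - 1/a, and
   both behave like (pi/2, - ln a - gamma) as a -> 0+.  Their difference therefore solves the
   rotation system d' = -e, e' = d and vanishes at 0+, so it is zero.  The behaviour of G at 0+
   rests on gamma = int_0^1 (1 - e^(-t)) / t dt - int_1^oo e^(-t) / t dt, which follows from
   H_m = int_0^m (1 - (1 - t/m)^m) / t dt. *)

From Stdlib Require Import Reals Lra Lia.
From Coquelicot Require Import Coquelicot.
Open Scope R_scope.

(** * Improper integrals over half-lines *)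

Lemma ex_RInt_continuous_R (f : R -> R) (a b : R) :
  (forall x, continuous f x) -> ex_RInt f a b.
Proof. intros Hf. apply (ex_RInt_continuous (V := R_CompleteNormedModule)); auto. Qed.

Lemma exp_le (x y : R) : x <= y -> exp x <= exp y.
Proof. intros [H | ->]; [left; apply exp_increasing; auto | lra]. Qed.

Lemma is_lim_pinfty_eps (f : R -> R) (L : R) :
  is_lim f p_infty L <->
  forall eps : posreal, exists M, forall x, M < x -> Rabs (f x - L) < eps.
Proof. rewrite <- is_lim_spec. simpl. tauto. Qed.

Lemma is_lim_pinfty_le (f g : R -> R) (lf lg M : R) :
  (forall x, M < x -> f x <= g x) -> is_lim f p_infty lf -> is_lim g p_infty lg -> lf <= lg.
Proof.
  intros Hfg Hf Hg. assert (H := is_lim_le_loc f g p_infty lf lg). simpl in H.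
  apply H; auto. now exists M.
Qed.

Definition is_RInt_pinfty (c : R) (f : R -> R) (L : R) : Prop :=
  (forall b, c <= b -> ex_RInt f c b) /\ is_lim (fun b => RInt f c b) p_infty L.

Definition RInt_pinfty (c : R) (f : R -> R) : R :=
  real (Lim (fun b => RInt f c b) p_infty).

Section ImproperIntegral.

Variable c : R.

Lemma is_RInt_pinfty_unique (f : R -> R) (L1 L2 : R) :
  is_RInt_pinfty c f L1 -> is_RInt_pinfty c f L2 -> L1 = L2.
Proof.
  intros [_ H1] [_ H2].
  assert (E := is_lim_unique _ _ _ H1). rewrite (is_lim_unique _ _ _ H2) in E.
  now injection E.
Qed.

Lemma RInt_pinfty_eq (f : R -> R) (L : R) : is_RInt_pinfty c f L -> RInt_pinfty c f = L.
Proof. intros [_ H]. unfold RInt_pinfty. now rewrite (is_lim_unique _ _ _ H). Qed.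

Lemma RInt_pinfty_correct (f : R -> R) :
  (exists L, is_RInt_pinfty c f L) -> is_RInt_pinfty c f (RInt_pinfty c f).
Proof. intros [L H]. now rewrite (RInt_pinfty_eq f L H). Qed.

Lemma ex_RInt_inner (f : R -> R) (u v : R) :
  (forall b, c <= b -> ex_RInt f c b) -> c <= u <= v -> ex_RInt f u v.
Proof. intros H Hu. apply (ex_RInt_Chasles_2 f c u v); [lra | apply H; lra]. Qed.

Lemma is_RInt_pinfty_ext (f g : R -> R) (L : R) :
  (forall x, c <= x -> f x = g x) -> is_RInt_pinfty c f L -> is_RInt_pinfty c g L.
Proof.
  intros Hfg [H1 H2]. split.
  - intros b Hb. apply ex_RInt_ext with f; [| now apply H1].
    intros x Hx. apply Hfg. rewrite Rmin_left in Hx; lra.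
  - apply is_lim_ext_loc with (fun b => RInt f c b); [| exact H2].
    exists c. intros b Hb. apply RInt_ext. intros x Hx. apply Hfg.
    rewrite Rmin_left in Hx; lra.
Qed.

Lemma is_RInt_pinfty_const_0 : is_RInt_pinfty c (fun _ => 0) 0.
Proof.
  split; [intros; apply ex_RInt_const |].
  apply is_lim_ext with (fun _ => 0); [| apply is_lim_const].
  intros. rewrite RInt_const. unfold scal; simpl; unfold mult; simpl. ring.
Qed.

Lemma is_RInt_pinfty_plus (f g : R -> R) (Lf Lg : R) :
  is_RInt_pinfty c f Lf -> is_RInt_pinfty c g Lg ->
  is_RInt_pinfty c (fun x => f x + g x) (Lf + Lg).
Proof.
  intros [F1 F2] [G1 G2]. split.
  - intros b Hb. apply (ex_RInt_plus f g); auto.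
  - apply is_lim_ext_loc with (fun b => RInt f c b + RInt g c b).
    + exists c. intros b Hb. symmetry. apply (RInt_plus f g); [apply F1 | apply G1]; lra.
    + now apply (is_lim_plus' _ _ p_infty Lf Lg).
Qed.

Lemma is_RInt_pinfty_scal (f : R -> R) (k L : R) :
  is_RInt_pinfty c f L -> is_RInt_pinfty c (fun x => k * f x) (k * L).
Proof.
  intros [F1 F2]. split.
  - intros b Hb. apply (ex_RInt_scal f); auto.
  - apply is_lim_ext_loc with (fun b => k * RInt f c b).
    + exists c. intros b Hb. symmetry. apply (RInt_scal f). apply F1; lra.
    + now apply (is_lim_scal_l _ k p_infty L).
Qed.

Lemma is_RInt_pinfty_opp (f : R -> R) (L : R) :
  is_RInt_pinfty c f L -> is_RInt_pinfty c (fun x => - f x) (- L).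
Proof.
  intros H. apply is_RInt_pinfty_ext with (fun x => -1 * f x); [intros; ring |].
  replace (- L) with (-1 * L) by ring. now apply is_RInt_pinfty_scal.
Qed.

Lemma is_RInt_pinfty_minus (f g : R -> R) (Lf Lg : R) :
  is_RInt_pinfty c f Lf -> is_RInt_pinfty c g Lg ->
  is_RInt_pinfty c (fun x => f x - g x) (Lf - Lg).
Proof. intros H1 H2. apply is_RInt_pinfty_plus; auto. now apply is_RInt_pinfty_opp. Qed.

Lemma is_RInt_pinfty_le (f g : R -> R) (Lf Lg : R) :
  (forall x, c <= x -> f x <= g x) ->
  is_RInt_pinfty c f Lf -> is_RInt_pinfty c g Lg -> Lf <= Lg.
Proof.
  intros Hle [F1 F2] [G1 G2].
  apply (is_lim_pinfty_le (fun b => RInt f c b) (fun b => RInt g c b) Lf Lg c); auto.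
  intros b Hb. apply RInt_le; try (apply F1 || apply G1); try lra.
  intros; apply Hle; lra.
Qed.

Lemma is_RInt_pinfty_abs_le (f g : R -> R) (Lf Lg : R) :
  (forall x, c <= x -> Rabs (f x) <= g x) ->
  is_RInt_pinfty c f Lf -> is_RInt_pinfty c g Lg -> Rabs Lf <= Lg.
Proof.
  intros Hle Hf Hg. apply Rabs_le. split.
  - apply (is_RInt_pinfty_le (fun x => - g x) f); auto using is_RInt_pinfty_opp.
    intros x Hx. specialize (Hle x Hx). apply Rabs_le_between in Hle. lra.
  - apply (is_RInt_pinfty_le f g); auto.
    intros x Hx. specialize (Hle x Hx). apply Rabs_le_between in Hle. lra.
Qed.

Lemma is_RInt_pinfty_dist_le (f g k : R -> R) (Lf Lg Lk : R) :
  is_RInt_pinfty c f Lf -> is_RInt_pinfty c g Lg -> is_RInt_pinfty c k Lk ->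
  (forall x, c <= x -> Rabs (f x - g x) <= k x) -> Rabs (Lf - Lg) <= Lk.
Proof.
  intros Hf Hg Hk Hb.
  apply (is_RInt_pinfty_abs_le (fun x => f x - g x) k); auto using is_RInt_pinfty_minus.
Qed.

Lemma is_RInt_pinfty_le_bound (f : R -> R) (L B : R) :
  (forall b, c <= b -> RInt f c b <= B) -> is_RInt_pinfty c f L -> L <= B.
Proof.
  intros Hb [_ H].
  apply (is_lim_pinfty_le (fun b => RInt f c b) (fun _ => B) L B c); auto.
  - intros; apply Hb; lra.
  - apply is_lim_const.
Qed.

Lemma is_RInt_pinfty_ge_bound (f : R -> R) (L B : R) :
  (forall b, c <= b -> B <= RInt f c b) -> is_RInt_pinfty c f L -> B <= L.
Proof.
  intros Hb [_ H].
  apply (is_lim_pinfty_le (fun _ => B) (fun b => RInt f c b) B L c); auto.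
  - intros; apply Hb; lra.
  - apply is_lim_const.
Qed.

Lemma RInt_le_is_RInt_pinfty (f : R -> R) (L b : R) :
  (forall x, c <= x -> 0 <= f x) -> is_RInt_pinfty c f L -> c <= b -> RInt f c b <= L.
Proof.
  intros Hp [F1 F2] Hb.
  apply (is_lim_pinfty_le (fun _ => RInt f c b) (fun y => RInt f c y) _ L b); auto.
  - intros y Hy.
    rewrite <- (RInt_Chasles f c b y); [| apply F1; lra | apply (ex_RInt_inner f); auto; lra].
    assert (0 <= RInt f b y).
    { apply RInt_ge_0; [lra | apply (ex_RInt_inner f); auto; lra | intros; apply Hp; lra]. }
    unfold plus; simpl. lra.
  - apply is_lim_const.
Qed.

Lemma is_RInt_pinfty_gt_0 (f : R -> R) (d L : R) : c < d ->
  (forall x, c <= x -> 0 <= f x) -> (forall x, c < x < d -> 0 < f x) ->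
  (forall x, c <= x <= d -> continuous f x) -> is_RInt_pinfty c f L -> 0 < L.
Proof.
  intros Hcd Hp Hs Hc Hf.
  assert (H1 := RInt_gt_0 f c d Hcd Hs Hc).
  assert (H2 := RInt_le_is_RInt_pinfty f L d Hp Hf ltac:(lra)). lra.
Qed.

Lemma is_RInt_pinfty_derive (f F : R -> R) (L : R) :
  (forall x, c <= x -> is_derive F x (f x)) -> (forall x, c <= x -> continuous f x) ->
  is_lim F p_infty L -> is_RInt_pinfty c f (L - F c).
Proof.
  intros HD HC HL.
  assert (Hi : forall b, c <= b -> is_RInt f c b (F b - F c)).
  { intros b Hb. apply (is_RInt_derive F f);
      intros x Hx; rewrite Rmin_left in Hx by lra; [apply HD | apply HC]; lra. }
  split.
  - intros b Hb. eexists; apply Hi; auto.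
  - apply is_lim_ext_loc with (fun b => F b - F c).
    + exists c. intros b Hb. symmetry. apply is_RInt_unique, Hi; lra.
    + apply (is_lim_minus' F (fun _ => F c) p_infty L (F c)); auto using is_lim_const.
Qed.

Lemma RInt_dominated_cauchy (f g : R -> R) (u v : R) :
  (forall x, c <= x -> continuous f x) -> (forall x, c <= x -> Rabs (f x) <= g x) ->
  (forall b, c <= b -> ex_RInt g c b) -> c <= u <= v ->
  Rabs (RInt f c v - RInt f c u) <= RInt g c v - RInt g c u.
Proof.
  intros Hc Hle Hg Huv.
  assert (Hf : forall b, c <= b -> ex_RInt f c b).
  { intros b Hb. apply (ex_RInt_continuous (V := R_CompleteNormedModule)). intros z Hz.
    rewrite Rmin_left, Rmax_right in Hz by lra. apply Hc; lra. }
  assert (Ef : RInt f c v - RInt f c u = RInt f u v).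
  { rewrite <- (RInt_Chasles f c u v); [| apply Hf; lra | apply ex_RInt_inner; auto; lra].
    unfold plus; simpl. lra. }
  assert (Eg : RInt g c v - RInt g c u = RInt g u v).
  { rewrite <- (RInt_Chasles g c u v); [| apply Hg; lra | apply ex_RInt_inner; auto; lra].
    unfold plus; simpl. lra. }
  rewrite Ef, Eg.
  eapply Rle_trans; [apply abs_RInt_le; [lra | apply ex_RInt_inner; auto; lra] |].
  apply RInt_le; [lra | | apply ex_RInt_inner; auto; lra | intros x Hx; apply Hle; lra].
  apply (ex_RInt_continuous (V := R_CompleteNormedModule)). intros z Hz.
  rewrite Rmin_left, Rmax_right in Hz by lra.
  apply continuous_comp; [apply Hc; lra | apply continuous_Rabs].
Qed.

(* Comparison test: the partial integrals of [f] form a Cauchy family, controlled by those of [g]. *)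
Lemma ex_is_RInt_pinfty_dominated (f g : R -> R) (Lg : R) :
  (forall x, c <= x -> continuous f x) -> (forall x, c <= x -> Rabs (f x) <= g x) ->
  is_RInt_pinfty c g Lg -> exists L, is_RInt_pinfty c f L.
Proof.
  intros Hc Hle [G1 G2].
  assert (Hf : forall b, c <= b -> ex_RInt f c b).
  { intros b Hb. apply (ex_RInt_continuous (V := R_CompleteNormedModule)). intros z Hz.
    rewrite Rmin_left, Rmax_right in Hz by lra. apply Hc; lra. }
  assert (Hex : exists y, filterlim (fun b => RInt f c b) (Rbar_locally p_infty) (locally y)).
  { apply (filterlim_locally_cauchy (F := Rbar_locally p_infty)). intros eps.
    assert (Heps2 : 0 < eps / 2) by (destruct eps; simpl; lra).
    destruct (proj1 (is_lim_pinfty_eps _ Lg) G2 (mkposreal _ Heps2)) as [M HM]. simpl in HM.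
    exists (fun x => Rmax M c < x). split; [now exists (Rmax M c) |].
    assert (Key : forall u v, Rmax M c < u -> u <= v -> Rabs (RInt f c v - RInt f c u) < eps).
    { intros u v Hu Huv. assert (Hm1 := Rmax_l M c). assert (Hm2 := Rmax_r M c).
      eapply Rle_lt_trans; [apply (RInt_dominated_cauchy f g); auto; lra |].
      assert (HMu := HM u ltac:(lra)). assert (HMv := HM v ltac:(lra)).
      apply Rabs_def2 in HMu. apply Rabs_def2 in HMv. lra. }
    intros u v Hu Hv. change (Rabs (RInt f c v - RInt f c u) < eps).
    destruct (Rle_dec u v); [apply Key; auto |].
    rewrite Rabs_minus_sym. apply Key; auto; lra. }
  destruct Hex as [y Hy]. exists y. now split.
Qed.

Lemma is_RInt_pinfty_Chasles_r (f : R -> R) (d L : R) :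
  c <= d -> is_RInt_pinfty c f L -> is_RInt_pinfty d f (L - RInt f c d).
Proof.
  intros Hcd [F1 F2]. split.
  - intros b Hb. apply (ex_RInt_inner f); auto; lra.
  - apply is_lim_ext_loc with (fun b => RInt f c b - RInt f c d).
    + exists d. intros b Hb.
      rewrite <- (RInt_Chasles f c d b); [| apply F1; lra | apply (ex_RInt_inner f); auto; lra].
      unfold plus; simpl. lra.
    + apply (is_lim_minus' _ (fun _ => RInt f c d) p_infty L); auto using is_lim_const.
Qed.

Lemma is_RInt_pinfty_Chasles_l (f : R -> R) (d L : R) :
  c <= d -> ex_RInt f c d -> is_RInt_pinfty d f L -> is_RInt_pinfty c f (RInt f c d + L).
Proof.
  intros Hcd Hex [F1 F2]. split.
  - intros b Hb. destruct (Rle_dec b d).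
    + apply (ex_RInt_Chasles_1 f c b d); [lra | auto].
    + apply (ex_RInt_Chasles f c d b); auto. apply F1; lra.
  - apply is_lim_ext_loc with (fun b => RInt f c d + RInt f d b).
    + exists d. intros b Hb. apply (RInt_Chasles f c d b); auto. apply F1; lra.
    + apply (is_lim_plus' (fun _ => RInt f c d) _ p_infty); auto using is_lim_const.
Qed.

Lemma is_RInt_pinfty_comp_scal (g : R -> R) (k L : R) :
  0 < k -> is_RInt_pinfty c g L -> is_RInt_pinfty (c / k) (fun v => k * g (k * v)) L.
Proof.
  intros Hk [G1 G2].
  assert (Hb : forall b, c / k <= b -> c <= k * b).
  { intros b Hb. apply Rmult_le_compat_l with (r := k) in Hb; [| lra].
    replace (k * (c / k)) with c in Hb by (field; lra). lra. }
  assert (Hscal : forall v, scal k (g (k * v + 0)) = k * g (k * v)).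
  { intros v. unfold scal; simpl; unfold mult; simpl. now rewrite Rplus_0_r. }
  assert (Hc : k * (c / k) + 0 = c) by (field; lra).
  assert (E : forall b, c / k <= b -> RInt (fun v => k * g (k * v)) (c / k) b = RInt g c (k * b)).
  { intros b Hb'. assert (H := RInt_comp_lin g k 0 (c / k) b).
    rewrite Hc, Rplus_0_r in H. rewrite <- H; [| apply G1, Hb, Hb'].
    apply RInt_ext. intros; now rewrite Hscal. }
  split.
  - intros b Hb'. assert (H := ex_RInt_comp_lin g k 0 (c / k) b).
    rewrite Hc, Rplus_0_r in H.
    eapply ex_RInt_ext; [intros; apply Hscal | apply H, G1, Hb, Hb'].
  - apply is_lim_pinfty_eps. intros eps.
    destruct (proj1 (is_lim_pinfty_eps (fun b => RInt g c b) L) G2 eps) as [M HM].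
    exists (Rmax (M / k) (c / k)). intros x Hx.
    assert (H1 := Rmax_l (M / k) (c / k)). assert (H2 := Rmax_r (M / k) (c / k)).
    rewrite E by lra. apply HM.
    apply Rmult_lt_compat_l with (r := k) in Hx; [| lra].
    apply Rmult_le_compat_l with (r := k) in H1; [| lra].
    replace (k * (M / k)) with M in H1 by (field; lra). lra.
Qed.

End ImproperIntegral.

Lemma is_derive_quadratic_remainder (F : R -> R) (x0 J delta k : R) : 0 < delta ->
  (forall h, Rabs h < delta -> Rabs (F (x0 + h) - F x0 - h * J) <= h ^ 2 * k) ->
  is_derive F x0 J.
Proof.
  intros Hd Bnd. apply is_derive_Reals. intros eps Heps.
  assert (Hk1 : 0 < Rabs k + 1) by (assert (0 <= Rabs k) by apply Rabs_pos; lra).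
  assert (Hd2 : 0 < Rmin delta (eps / (Rabs k + 1))).
  { apply Rmin_pos; auto. apply Rdiv_lt_0_compat; lra. }
  exists (mkposreal _ Hd2). intros h Hh0 Hh. simpl in Hh.
  assert (Hh1 : Rabs h < delta) by (eapply Rlt_le_trans; [apply Hh | apply Rmin_l]).
  assert (Hh2 : Rabs h < eps / (Rabs k + 1)) by (eapply Rlt_le_trans; [apply Hh | apply Rmin_r]).
  specialize (Bnd h Hh1).
  replace ((F (x0 + h) - F x0) / h - J) with ((F (x0 + h) - F x0 - h * J) / h) by (field; auto).
  unfold Rdiv. rewrite Rabs_mult, Rabs_inv.
  assert (Hah : 0 < Rabs h) by (apply Rabs_pos_lt; auto).
  apply Rmult_lt_reg_r with (Rabs h); auto. rewrite Rmult_assoc, Rinv_l by lra. rewrite Rmult_1_r.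
  eapply Rle_lt_trans; [apply Bnd |].
  replace (h ^ 2) with (Rabs h * Rabs h) by (rewrite <- Rabs_mult, Rabs_right; [ring | nra]).
  assert (k <= Rabs k) by apply RRle_abs.
  assert (Rabs h * (Rabs k + 1) < eps).
  { apply Rmult_lt_reg_r with (/ (Rabs k + 1)); [apply Rinv_0_lt_compat; lra |].
    rewrite Rmult_assoc, Rinv_r, Rmult_1_r by lra. exact Hh2. }
  nra.
Qed.

Lemma is_derive_RInt_pinfty_param (c x0 delta J k : R) (F : R -> R -> R) (I dF K : R -> R) :
  0 < delta -> (forall x, Rabs (x - x0) < delta -> is_RInt_pinfty c (F x) (I x)) ->
  is_RInt_pinfty c dF J -> is_RInt_pinfty c K k ->
  (forall x v, Rabs (x - x0) < delta -> c <= v ->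
     Rabs (F x v - F x0 v - (x - x0) * dF v) <= (x - x0) ^ 2 * K v) ->
  is_derive I x0 J.
Proof.
  intros Hd HF HdF HK Hb. apply (is_derive_quadratic_remainder I x0 J delta k Hd).
  intros h Hh.
  assert (Hx : Rabs (x0 + h - x0) < delta) by (now replace (x0 + h - x0) with h by ring).
  assert (Hx0 : Rabs (x0 - x0) < delta) by (rewrite Rminus_diag, Rabs_R0; lra).
  replace (I (x0 + h) - I x0 - h * J) with ((I (x0 + h) - I x0 - h * J) - 0) by ring.
  apply (is_RInt_pinfty_dist_le c (fun v => F (x0 + h) v - F x0 v - h * dF v) (fun _ => 0)
           (fun v => h ^ 2 * K v)).
  - apply is_RInt_pinfty_minus; [apply is_RInt_pinfty_minus; auto |].
    now apply is_RInt_pinfty_scal.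
  - apply is_RInt_pinfty_const_0.
  - now apply is_RInt_pinfty_scal.
  - intros v Hv. specialize (Hb (x0 + h) v Hx Hv).
    replace (x0 + h - x0) with h in Hb by ring. now rewrite Rminus_0_r.
Qed.

Lemma mvt_bound (g g' : R -> R) (x0 x M : R) :
  (forall t, Rmin x0 x <= t <= Rmax x0 x -> is_derive g t (g' t)) ->
  (forall t, Rmin x0 x <= t <= Rmax x0 x -> Rabs (g' t) <= M) ->
  Rabs (g x - g x0) <= M * Rabs (x - x0).
Proof.
  intros Hd Hb.
  destruct (MVT_gen g x0 x g') as [t [Ht ->]].
  - intros y Hy. apply Hd. lra.
  - intros y Hy. apply continuity_pt_filterlim.
    apply (ex_derive_continuous (K := R_AbsRing) (V := R_NormedModule)).
    eexists; apply Hd; auto.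
  - rewrite Rabs_mult. apply Rmult_le_compat_r; [apply Rabs_pos | auto].
Qed.

Lemma taylor2_bound (g g' g'' : R -> R) (x0 x M : R) :
  (forall t, Rmin x0 x <= t <= Rmax x0 x -> is_derive g t (g' t)) ->
  (forall t, Rmin x0 x <= t <= Rmax x0 x -> is_derive g' t (g'' t)) ->
  (forall t, Rmin x0 x <= t <= Rmax x0 x -> Rabs (g'' t) <= M) ->
  Rabs (g x - g x0 - (x - x0) * g' x0) <= M * (x - x0) ^ 2.
Proof.
  intros Hd Hd' Hb.
  assert (Hsub : forall t y, Rmin x0 x <= t <= Rmax x0 x -> Rmin x0 t <= y <= Rmax x0 t ->
                   Rmin x0 x <= y <= Rmax x0 x).
  { intros t y Ht Hy. unfold Rmin, Rmax in *.
    destruct (Rle_dec x0 x), (Rle_dec x0 t); lra. }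
  assert (Hg' : forall t, Rmin x0 x <= t <= Rmax x0 x ->
                  Rabs (g' t - g' x0) <= M * Rabs (x - x0)).
  { intros t Ht. eapply Rle_trans.
    - apply (mvt_bound g' g''); intros y Hy; [apply Hd' | apply Hb]; exact (Hsub t y Ht Hy).
    - assert (0 <= M) by (eapply Rle_trans; [apply Rabs_pos | apply (Hb t Ht)]).
      apply Rmult_le_compat_l; auto.
      unfold Rmin, Rmax in Ht. apply Rabs_le. destruct (Rle_dec x0 x);
        [rewrite Rabs_right | rewrite Rabs_left1]; lra. }
  replace (g x - g x0 - (x - x0) * g' x0) with
    ((fun t => g t - t * g' x0) x - (fun t => g t - t * g' x0) x0) by ring.
  assert (Esq : (x - x0) ^ 2 = Rabs (x - x0) * Rabs (x - x0)).
  { rewrite <- Rabs_mult, Rabs_right by apply Rle_ge, Rle_0_sqr. ring. }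
  rewrite Esq.
  rewrite <- Rmult_assoc.
  apply (mvt_bound (fun t => g t - t * g' x0) (fun t => g' t - g' x0) x0 x); auto.
  intros t Ht. apply (is_derive_minus g (fun t => t * g' x0)); [auto |].
  auto_derive; auto; ring.
Qed.

Lemma RInt_comp_shift (f : R -> R) (c t : R) : (forall x, continuous f x) ->
  RInt (fun u => f (c + u)) 0 t = RInt f c (c + t).
Proof.
  intros Hc. assert (H := RInt_comp_lin f 1 c 0 t).
  replace (1 * 0 + c) with c in H by ring. replace (1 * t + c) with (c + t) in H by ring.
  rewrite <- H by (apply ex_RInt_continuous_R; auto).
  apply RInt_ext. intros x _. unfold scal; simpl; unfold mult; simpl.
  rewrite Rmult_1_l. f_equal. ring.
Qed.

Lemma RInt_comp_reflect (f : R -> R) (c t : R) : (forall x, continuous f x) ->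
  RInt (fun u => f (c - u)) 0 t = RInt f (c - t) c.
Proof.
  intros Hc. assert (H := RInt_comp_lin f (-1) c 0 t).
  replace (-1 * 0 + c) with c in H by ring. replace (-1 * t + c) with (c - t) in H by ring.
  assert (Hex : forall a b, ex_RInt f a b) by (intros; apply ex_RInt_continuous_R, Hc).
  rewrite <- (opp_RInt_swap f), <- H by apply Hex.
  assert (E : RInt (fun y => scal (-1) (f (-1 * y + c))) 0 t = opp (RInt (fun u => f (c - u)) 0 t)).
  { rewrite <- RInt_opp.
    - apply RInt_ext. intros x _. unfold scal, opp; simpl; unfold mult; simpl.
      replace (-1 * x + c) with (c - x) by ring. ring.
    - apply ex_RInt_continuous_R. intros x.
      apply (continuous_comp (fun u => c - u) f); [| apply Hc].
      apply (continuous_minus (fun _ => c) (fun u => u)); [apply continuous_const | apply continuous_id]. }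
  transitivity (opp (opp (RInt (fun u => f (c - u)) 0 t)) : R).
  - unfold opp; simpl. lra.
  - f_equal. symmetry. exact E.
Qed.

Lemma is_RInt_gen_halves (f : R -> R) (c L1 L2 : R) : (forall x, continuous f x) ->
  is_RInt_pinfty 0 (fun u => f (c + u)) L1 -> is_RInt_pinfty 0 (fun u => f (c - u)) L2 ->
  is_RInt_gen f (Rbar_locally m_infty) (Rbar_locally p_infty) (L1 + L2).
Proof.
  intros Hc [_ F2] [_ G2].
  replace (L1 + L2) with (plus L2 L1) by (unfold plus; simpl; ring).
  apply (is_RInt_gen_Chasles (Fa := Rbar_locally m_infty) (Fc := Rbar_locally p_infty) f c).
  - intros P [eps Heps]. destruct (proj1 (is_lim_pinfty_eps _ _) G2 eps) as [M HM].
    apply (Filter_prod _ _ _ (fun a => a < c - Rmax M 0) (fun b => b = c));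
      [now exists (c - Rmax M 0) | reflexivity |].
    intros a b Ha ->. simpl. exists (RInt f a c). split.
    + apply (RInt_correct (V := R_CompleteNormedModule)), ex_RInt_continuous_R, Hc.
    + apply Heps. replace a with (c - (c - a)) at 1 by ring.
      rewrite <- RInt_comp_reflect by auto. apply HM.
      assert (Hm := Rmax_l M 0). lra.
  - intros P [eps Heps]. destruct (proj1 (is_lim_pinfty_eps _ _) F2 eps) as [M HM].
    apply (Filter_prod _ _ _ (fun a => a = c) (fun b => c + Rmax M 0 < b));
      [reflexivity | now exists (c + Rmax M 0) |].
    intros a b -> Hb. simpl. exists (RInt f c b). split.
    + apply (RInt_correct (V := R_CompleteNormedModule)), ex_RInt_continuous_R, Hc.
    + apply Heps. replace b with (c + (b - c)) at 1 by ring.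
      rewrite <- RInt_comp_shift by auto. apply HM.
      assert (Hm := Rmax_l M 0). lra.
Qed.

(* The two half-line integrals around [c] are handled by the comparison test; only the
   integral of their sum [f (c + u) + f (c - u)] has to be computed. *)
Lemma int_R_dominated (f g : R -> R) (c Lg L : R) : (forall x, continuous f x) ->
  is_RInt_pinfty 0 g Lg ->
  (forall u, 0 <= u -> Rabs (f (c + u)) <= g u /\ Rabs (f (c - u)) <= g u) ->
  is_RInt_pinfty 0 (fun u => f (c + u) + f (c - u)) L -> int_R f = L.
Proof.
  intros Hc Hg Hdom HL.
  assert (Hcomp : forall s, (forall x, continuous (fun u => f (c + s * u)) x)).
  { intros s x. apply (continuous_comp (fun u => c + s * u) f); [| apply Hc].
    apply (ex_derive_continuous (K := R_AbsRing) (V := R_NormedModule)). auto_derive; auto. }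
  destruct (ex_is_RInt_pinfty_dominated 0 (fun u => f (c + u)) g Lg) as [L1 H1]; auto.
  { intros x _. assert (H := Hcomp 1 x). eapply continuous_ext; [| exact H].
    intros u. simpl. now rewrite Rmult_1_l. }
  { intros x Hx. apply Hdom, Hx. }
  destruct (ex_is_RInt_pinfty_dominated 0 (fun u => f (c - u)) g Lg) as [L2 H2]; auto.
  { intros x _. assert (H := Hcomp (-1) x). eapply continuous_ext; [| exact H].
    intros u. simpl. f_equal. ring. }
  { intros x Hx. apply Hdom, Hx. }
  rewrite (is_RInt_pinfty_unique 0 _ L (L1 + L2) HL); [| now apply is_RInt_pinfty_plus].
  apply is_RInt_gen_unique, (is_RInt_gen_halves f c); auto.
Qed.

(** * Elementary improper integrals *)

Lemma is_lim_exp_neg_lin (b : R) (h : R -> R) (l : Rbar) : 0 < b ->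
  is_lim h m_infty l -> is_lim (fun v => h (- b * v)) p_infty l.
Proof.
  intros Hb Hh. apply (is_lim_comp h (fun v => - b * v) p_infty l m_infty); auto.
  - replace m_infty with (Rbar_mult p_infty (- b)).
    + apply (is_lim_ext (fun v => v * (- b))); [intros; ring |].
      apply is_lim_scal_r, is_lim_id.
    + simpl. destruct (Rle_dec 0 (- b)) as [Hc | Hc]; [exfalso; lra | reflexivity].
  - exists 0. intros; discriminate.
Qed.

Lemma is_lim_exp_neg (b : R) : 0 < b -> is_lim (fun v => exp (- b * v)) p_infty 0.
Proof. intros Hb. apply (is_lim_exp_neg_lin b exp); auto using is_lim_exp_m. Qed.

Lemma is_lim_xexp_neg (b : R) : 0 < b -> is_lim (fun v => v * exp (- b * v)) p_infty 0.
Proof.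
  intros Hb.
  apply (is_lim_ext (fun v => (- / b) * ((- b * v) * exp (- b * v)))); [intros; field; lra |].
  replace (Finite 0) with (Rbar_mult (- / b) 0) by (simpl; f_equal; ring).
  apply (is_lim_scal_l (fun v => (- b * v) * exp (- b * v)) (- / b) p_infty 0).
  apply (is_lim_exp_neg_lin b (fun y => y * exp y)); auto using is_lim_mul_exp_m.
Qed.

Lemma is_lim_x2exp_neg (b : R) : 0 < b -> is_lim (fun v => v ^ 2 * exp (- b * v)) p_infty 0.
Proof.
  intros Hb.
  apply (is_lim_ext (fun v => (v * exp (- (b / 2) * v)) * (v * exp (- (b / 2) * v)))).
  { intros v. replace (- b * v) with (- (b / 2) * v + - (b / 2) * v) by field.
    rewrite exp_plus. ring. }
  replace (Finite 0) with (Rbar_mult 0 0) by (simpl; f_equal; ring).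
  apply is_lim_mult; [apply is_lim_xexp_neg; lra | apply is_lim_xexp_neg; lra | simpl; auto].
Qed.

Lemma is_lim_poly2_exp_neg (b p0 p1 p2 : R) : 0 < b ->
  is_lim (fun v => (p2 * v ^ 2 + p1 * v + p0) * exp (- b * v)) p_infty 0.
Proof.
  intros Hb.
  apply (is_lim_ext (fun v => p2 * (v ^ 2 * exp (- b * v)) +
                              (p1 * (v * exp (- b * v)) + p0 * exp (- b * v)))); [intros; ring |].
  replace (Finite 0) with (Finite (p2 * 0 + (p1 * 0 + p0 * 0))) by (f_equal; ring).
  apply is_lim_plus'; [apply (is_lim_scal_l _ p2 p_infty 0), is_lim_x2exp_neg; auto |].
  apply is_lim_plus'; [apply (is_lim_scal_l _ p1 p_infty 0), is_lim_xexp_neg; auto |].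
  apply (is_lim_scal_l _ p0 p_infty 0), is_lim_exp_neg; auto.
Qed.

(* [int_0^oo (p2 v^2 + p1 v + p0) e^(-bv) dv], from the antiderivative [- (q2 v^2 + q1 v + q0) e^(-bv)]. *)
Lemma is_RInt_pinfty_poly2_exp (b p0 p1 p2 : R) : 0 < b ->
  is_RInt_pinfty 0 (fun v => (p2 * v ^ 2 + p1 * v + p0) * exp (- b * v))
    (p0 / b + p1 / b ^ 2 + 2 * p2 / b ^ 3).
Proof.
  intros Hb.
  set (q2 := p2 / b). set (q1 := p1 / b + 2 * p2 / b ^ 2). set (q0 := p0 / b + p1 / b ^ 2 + 2 * p2 / b ^ 3).
  replace q0 with (0 - (- q2 * 0 ^ 2 + - q1 * 0 + - q0) * exp (- b * 0))
    by (replace (- b * 0) with 0 by ring; rewrite exp_0; ring).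
  apply (is_RInt_pinfty_derive 0 _ (fun v => (- q2 * v ^ 2 + - q1 * v + - q0) * exp (- b * v))).
  - intros x _. auto_derive; auto. unfold q0, q1, q2. field. lra.
  - intros x _. apply (ex_derive_continuous (K := R_AbsRing) (V := R_NormedModule)).
    auto_derive; auto.
  - apply is_lim_poly2_exp_neg; auto.
Qed.

Lemma is_RInt_pinfty_exp (b : R) : 0 < b -> is_RInt_pinfty 0 (fun v => exp (- b * v)) (/ b).
Proof.
  intros Hb. assert (H := is_RInt_pinfty_poly2_exp b 1 0 0 Hb).
  replace (1 / b + 0 / b ^ 2 + 2 * 0 / b ^ 3) with (/ b) in H by (field; lra).
  eapply is_RInt_pinfty_ext; [| exact H]. intros; simpl; ring.
Qed.

Lemma is_RInt_pinfty_xexp (b : R) : 0 < b -> is_RInt_pinfty 0 (fun v => v * exp (- b * v)) (/ b ^ 2).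
Proof.
  intros Hb. assert (H := is_RInt_pinfty_poly2_exp b 0 1 0 Hb).
  replace (0 / b + 1 / b ^ 2 + 2 * 0 / b ^ 3) with (/ b ^ 2) in H by (field; lra).
  eapply is_RInt_pinfty_ext; [| exact H]. intros; simpl; ring.
Qed.

Lemma is_RInt_pinfty_x2exp (b : R) : 0 < b ->
  is_RInt_pinfty 0 (fun v => v ^ 2 * exp (- b * v)) (2 / b ^ 3).
Proof.
  intros Hb. assert (H := is_RInt_pinfty_poly2_exp b 0 0 1 Hb).
  replace (0 / b + 0 / b ^ 2 + 2 * 1 / b ^ 3) with (2 / b ^ 3) in H by (field; lra).
  eapply is_RInt_pinfty_ext; [| exact H]. intros; simpl; ring.
Qed.

Lemma is_lim_atan_pinfty : is_lim atan p_infty (PI / 2).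
Proof.
  apply (is_lim_ext_loc (fun v => PI / 2 - atan (/ v))).
  { exists 0. intros v Hv. rewrite atan_inv by auto. ring. }
  replace (Finite (PI / 2)) with (Finite (PI / 2 - atan 0)) by (rewrite atan_0; f_equal; ring).
  apply (is_lim_minus' (fun _ => PI / 2) (fun v => atan (/ v)) p_infty); [apply is_lim_const |].
  apply (is_lim_comp_continuous (fun v => / v) atan p_infty 0); [| apply continuous_atan].
  replace (Finite 0) with (Rbar_inv p_infty) by reflexivity.
  apply is_lim_inv; [apply is_lim_id | discriminate].
Qed.

(** * Functions vanishing at 0+ and the rotation system *)

Definition vanishes_at_0 (f : R -> R) : Prop :=
  forall eps, 0 < eps -> exists delta, 0 < delta /\ forall a, 0 < a < delta -> Rabs (f a) <= eps.

Lemma vanishes_at_0_le (f g : R -> R) :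
  (forall a, 0 < a < 1 -> Rabs (f a) <= g a) -> vanishes_at_0 g -> vanishes_at_0 f.
Proof.
  intros H Hg eps Heps. destruct (Hg eps Heps) as [d [Hd Hb]].
  exists (Rmin d 1). split; [apply Rmin_pos; lra |].
  intros a Ha. assert (Rmin d 1 <= d) by apply Rmin_l. assert (Rmin d 1 <= 1) by apply Rmin_r.
  eapply Rle_trans; [apply H; lra |].
  specialize (Hb a ltac:(lra)). apply Rabs_le_between in Hb. lra.
Qed.

Lemma vanishes_at_0_ext (f g : R -> R) :
  (forall a, 0 < a -> f a = g a) -> vanishes_at_0 g -> vanishes_at_0 f.
Proof.
  intros H Hg eps Heps. destruct (Hg eps Heps) as [d [Hd Hb]].
  exists d. split; auto. intros a Ha. rewrite H by lra. auto.
Qed.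

Lemma vanishes_at_0_plus (f g : R -> R) :
  vanishes_at_0 f -> vanishes_at_0 g -> vanishes_at_0 (fun a => f a + g a).
Proof.
  intros Hf Hg eps Heps. destruct (Hf (eps / 2) ltac:(lra)) as [d1 [Hd1 H1]].
  destruct (Hg (eps / 2) ltac:(lra)) as [d2 [Hd2 H2]].
  exists (Rmin d1 d2). split; [apply Rmin_pos; lra |].
  intros a Ha. assert (Rmin d1 d2 <= d1) by apply Rmin_l. assert (Rmin d1 d2 <= d2) by apply Rmin_r.
  eapply Rle_trans; [apply Rabs_triang |].
  specialize (H1 a ltac:(lra)). specialize (H2 a ltac:(lra)). lra.
Qed.

Lemma vanishes_at_0_scal (k : R) (f : R -> R) :
  vanishes_at_0 f -> vanishes_at_0 (fun a => k * f a).
Proof.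
  intros Hf eps Heps.
  assert (Hk : 0 < Rabs k + 1) by (assert (0 <= Rabs k) by apply Rabs_pos; lra).
  destruct (Hf (eps / (Rabs k + 1))) as [d [Hd H]]; [apply Rdiv_lt_0_compat; lra |].
  exists d. split; auto. intros a Ha. specialize (H a Ha). rewrite Rabs_mult.
  apply Rle_trans with ((Rabs k + 1) * (eps / (Rabs k + 1))); [| right; field; lra].
  apply Rmult_le_compat; auto using Rabs_pos; lra.
Qed.

Lemma vanishes_at_0_abs (f : R -> R) : vanishes_at_0 f -> vanishes_at_0 (fun a => Rabs (f a)).
Proof.
  intros Hf eps Heps. destruct (Hf eps Heps) as [d [Hd H]].
  exists d. split; auto. intros a Ha. rewrite Rabs_Rabsolu. auto.
Qed.

Lemma vanishes_at_0_id : vanishes_at_0 (fun a => a).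
Proof. intros eps Heps. exists eps. split; auto. intros a Ha. rewrite Rabs_right; lra. Qed.

Lemma vanishes_at_0_x_ln_x : vanishes_at_0 (fun a => a * ln a).
Proof.
  intros eps Heps.
  destruct (proj1 (is_lim_pinfty_eps (fun y => ln y / y) 0) is_lim_div_ln_p (mkposreal _ Heps))
    as [M HM]. simpl in HM.
  assert (H1 := Rmax_r M 1). assert (H2 := Rmax_l M 1).
  exists (/ Rmax M 1). split; [apply Rinv_0_lt_compat; lra |].
  intros a Ha.
  assert (Hia : Rmax M 1 < / a).
  { replace (Rmax M 1) with (/ / Rmax M 1) by (field; lra). apply Rinv_lt_contravar; nra. }
  specialize (HM (/ a) ltac:(lra)). rewrite Rminus_0_r in HM.
  replace (a * ln a) with (- (ln (/ a) / / a)) by (rewrite ln_Rinv by lra; field; lra).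
  rewrite Rabs_Ropp. lra.
Qed.

Lemma derive_0_const (F : R -> R) (a1 a2 : R) :
  (forall a, 0 < a -> is_derive F a 0) -> 0 < a1 -> 0 < a2 -> F a1 = F a2.
Proof.
  intros HD.
  assert (K : forall a1 a2, 0 < a1 -> a1 < a2 -> F a1 = F a2).
  { clear a1 a2. intros a1 a2 H1 H2.
    assert (H := mvt_bound F (fun _ => 0) a1 a2 0).
    rewrite Rmin_left, Rmax_right, Rmult_0_l in H by lra.
    apply Rabs_le_between in H; [lra | |]; intros; [apply HD | rewrite Rabs_R0]; lra. }
  intros H1 H2. destruct (Rtotal_order a1 a2) as [h | [-> | h]]; auto.
  symmetry; apply K; auto.
Qed.

Lemma zero_of_derive_0_vanishes_at_0 (F : R -> R) (a : R) : (forall a, 0 < a -> is_derive F a 0) ->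
  vanishes_at_0 F -> 0 < a -> F a = 0.
Proof.
  intros HD Hs Ha.
  destruct (Req_dec (F a) 0) as [h | h]; auto. exfalso.
  assert (Hp : 0 < Rabs (F a) / 2) by (apply Rabs_pos_lt in h; lra).
  destruct (Hs _ Hp) as [dl [Hdl Hb]].
  specialize (Hb (Rmin (dl / 2) a) ltac:(assert (H := Rmin_l (dl / 2) a);
                                          split; [apply Rmin_pos | ]; lra)).
  rewrite (derive_0_const F _ a HD) in Hb by (try apply Rmin_pos; lra). lra.
Qed.

Lemma Rabs_comb_le (u v p q : R) :
  Rabs p <= 1 -> Rabs q <= 1 -> Rabs (u * p + v * q) <= Rabs u + Rabs v.
Proof.
  intros Hp Hq. eapply Rle_trans; [apply Rabs_triang |]. rewrite !Rabs_mult.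
  assert (0 <= Rabs u) by apply Rabs_pos. assert (0 <= Rabs v) by apply Rabs_pos.
  assert (Rabs u * Rabs p <= Rabs u) by (rewrite <- (Rmult_1_r (Rabs u)) at 2; apply Rmult_le_compat_l; auto).
  assert (Rabs v * Rabs q <= Rabs v) by (rewrite <- (Rmult_1_r (Rabs v)) at 2; apply Rmult_le_compat_l; auto).
  lra.
Qed.

(* [d cos + e sin] and [d sin - e cos] are first integrals of the system. *)
Lemma rotation_system_zero (d e : R -> R) :
  (forall a, 0 < a -> is_derive d a (- e a)) -> (forall a, 0 < a -> is_derive e a (d a)) ->
  vanishes_at_0 d -> vanishes_at_0 e -> forall a, 0 < a -> d a = 0 /\ e a = 0.
Proof.
  intros Hd He Vd Ve a Ha.
  assert (Dd : forall t, 0 < t -> derivable_pt_lim d t (- e t))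
    by (intros; apply is_derive_Reals; auto).
  assert (De : forall t, 0 < t -> derivable_pt_lim e t (d t))
    by (intros; apply is_derive_Reals; auto).
  assert (Vde : vanishes_at_0 (fun t => Rabs (d t) + Rabs (e t)))
    by (apply vanishes_at_0_plus; apply vanishes_at_0_abs; auto).
  assert (Hcos : forall t, Rabs (cos t) <= 1) by (intros; apply Rabs_le, COS_bound).
  assert (Hsin : forall t, Rabs (sin t) <= 1) by (intros; apply Rabs_le, SIN_bound).
  assert (Z1 : d a * cos a + e a * sin a = 0).
  { apply (zero_of_derive_0_vanishes_at_0 (fun t => d t * cos t + e t * sin t)); auto.
    - intros t Ht. apply is_derive_Reals.
      replace 0 with (- e t * cos t + d t * - sin t + (d t * sin t + e t * cos t)) by ring.
      apply derivable_pt_lim_plus; apply derivable_pt_lim_mult;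
        auto using derivable_pt_lim_cos, derivable_pt_lim_sin.
    - apply (vanishes_at_0_le _ _ (fun t _ => Rabs_comb_le _ _ _ _ (Hcos t) (Hsin t)) Vde). }
  assert (Z2 : d a * sin a - e a * cos a = 0).
  { apply (zero_of_derive_0_vanishes_at_0 (fun t => d t * sin t - e t * cos t)); auto.
    - intros t Ht. apply is_derive_Reals.
      replace 0 with (- e t * sin t + d t * cos t - (d t * cos t + e t * - sin t)) by ring.
      apply derivable_pt_lim_minus; apply derivable_pt_lim_mult;
        auto using derivable_pt_lim_cos, derivable_pt_lim_sin.
    - apply (vanishes_at_0_le _ (fun t => Rabs (d t) + Rabs (- e t))).
      + intros t _. unfold Rminus. rewrite Ropp_mult_distr_l. apply Rabs_comb_le; auto.
      + eapply vanishes_at_0_le; [| exact Vde]. intros t _. rewrite Rabs_Ropp.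
        rewrite Rabs_right; [lra | apply Rle_ge, Rplus_le_le_0_compat; apply Rabs_pos]. }
  assert (Hcs := sin2_cos2 a). unfold Rsqr in Hcs.
  split; nra.
Qed.

(** * The sine and cosine integrals *)

Lemma Rabs_div_le (x y B : R) : y <> 0 -> Rabs x <= B * Rabs y -> Rabs (x / y) <= B.
Proof.
  intros Hy H. assert (Hp : 0 < Rabs y) by (apply Rabs_pos_lt; auto).
  unfold Rdiv. rewrite Rabs_mult, Rabs_inv.
  apply Rmult_le_reg_r with (Rabs y); auto. rewrite Rmult_assoc, Rinv_l; lra.
Qed.

Lemma Rabs_sq (t : R) : t ^ 2 = Rabs t * Rabs t.
Proof. rewrite <- Rabs_mult, Rabs_right by apply Rle_ge, Rle_0_sqr. ring. Qed.

Lemma locally_neq_0 (x : R) : x <> 0 -> locally x (fun y => y <> 0).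
Proof.
  intros Hx. assert (Hp : 0 < Rabs x) by (apply Rabs_pos_lt; auto).
  exists (mkposreal _ Hp). intros y Hy ->. simpl in Hy.
  unfold ball in Hy; simpl in Hy; unfold AbsRing_ball, abs, minus, plus, opp in Hy; simpl in Hy.
  rewrite Rplus_0_l, Rabs_Ropp in Hy. lra.
Qed.

Lemma continuous_removable (g : R -> R) (v K x : R) : (forall y, derivable_pt g y) ->
  (forall t, Rabs t <= 1 -> Rabs (g t - v * t) <= K * t ^ 2) ->
  continuous (fun t => if Req_EM_T t 0 then v else g t / t) x.
Proof.
  intros Hg Hb. destruct (Req_dec x 0) as [-> | Hx].
  - apply continuity_pt_filterlim. intros eps Heps.
    assert (HK : 0 < Rabs K + 1) by (assert (0 <= Rabs K) by apply Rabs_pos; lra).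
    exists (Rmin 1 (eps / (Rabs K + 1))).
    split; [apply Rmin_pos; [lra | apply Rdiv_lt_0_compat; lra] |].
    intros t [_ Ht]. simpl in Ht. unfold R_dist in Ht. rewrite Rminus_0_r in Ht. simpl. unfold R_dist.
    assert (Ht1 := Rmin_l 1 (eps / (Rabs K + 1))). assert (Ht2 := Rmin_r 1 (eps / (Rabs K + 1))).
    destruct (Req_EM_T 0 0) as [_ | ]; [| congruence].
    destruct (Req_EM_T t 0) as [-> | Ht0]; [rewrite Rminus_diag, Rabs_R0; lra |].
    replace (g t / t - v) with ((g t - v * t) / t) by (field; auto).
    apply Rle_lt_trans with ((Rabs K + 1) * Rabs t).
    + apply Rabs_div_le; auto. eapply Rle_trans; [apply Hb; lra |].
      rewrite Rabs_sq, <- Rmult_assoc. apply Rmult_le_compat_r; [apply Rabs_pos |].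
      assert (K <= Rabs K) by apply RRle_abs. assert (0 <= Rabs t) by apply Rabs_pos. nra.
    + apply Rmult_lt_compat_l with (r := Rabs K + 1) in Ht; [| lra].
      assert ((Rabs K + 1) * Rmin 1 (eps / (Rabs K + 1)) <= eps); [| lra].
      replace eps with ((Rabs K + 1) * (eps / (Rabs K + 1))) at 2 by (field; lra).
      apply Rmult_le_compat_l; lra.
  - apply continuous_ext_loc with (fun t => g t / t).
    + eapply filter_imp; [| apply locally_neq_0; eauto]. intros y Hy.
      destruct (Req_EM_T y 0); [congruence | auto].
    + apply continuity_pt_filterlim, derivable_continuous_pt.
      apply derivable_pt_div; auto using derivable_pt_id.
Qed.

Lemma Rabs_sin_le (t : R) : Rabs (sin t) <= Rabs t.
Proof.
  replace (sin t) with (sin t - sin 0) by (rewrite sin_0; ring).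
  replace (Rabs t) with (1 * Rabs (t - 0)) by (rewrite Rminus_0_r; ring).
  apply mvt_bound with cos; intros; [apply is_derive_Reals, derivable_pt_lim_sin |].
  apply Rabs_le, COS_bound.
Qed.

Lemma Rabs_sin_sub_le (t : R) : Rabs (sin t - t) <= t ^ 2.
Proof.
  replace (sin t - t) with (sin t - sin 0 - (t - 0) * cos 0) by (rewrite sin_0, cos_0; ring).
  replace (t ^ 2) with (1 * (t - 0) ^ 2) by ring.
  apply taylor2_bound with (fun x => - sin x); intros.
  - apply is_derive_Reals, derivable_pt_lim_sin.
  - apply is_derive_Reals, derivable_pt_lim_cos.
  - rewrite Rabs_Ropp. apply Rabs_le, SIN_bound.
Qed.

Lemma Rabs_cos_sub_1_le (t : R) : Rabs (cos t - 1) <= t ^ 2.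
Proof.
  replace (cos t - 1) with (cos t - cos 0 - (t - 0) * - sin 0) by (rewrite sin_0, cos_0; ring).
  replace (t ^ 2) with (1 * (t - 0) ^ 2) by ring.
  apply (taylor2_bound cos (fun x => - sin x) (fun x => - cos x)); intros.
  - apply is_derive_Reals, derivable_pt_lim_cos.
  - apply (is_derive_opp sin), is_derive_Reals, derivable_pt_lim_sin.
  - rewrite Rabs_Ropp. apply Rabs_le, COS_bound.
Qed.

Lemma continuous_sinc (x : R) : continuous sinc x.
Proof.
  apply (continuous_removable sin 1 1); [apply derivable_pt_sin |].
  intros t _. rewrite Rmult_1_l, Rmult_1_l. apply Rabs_sin_sub_le.
Qed.

Lemma continuous_cosm1_div (x : R) : continuous cosm1_div x.
Proof.
  apply (continuous_removable (fun t => cos t - 1) 0 1).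
  - intros y. apply derivable_pt_minus; [apply derivable_pt_cos | apply derivable_pt_const].
  - intros t _. rewrite Rmult_0_l, Rminus_0_r, Rmult_1_l. apply Rabs_cos_sub_1_le.
Qed.

Lemma Rabs_sinc_le (t : R) : Rabs (sinc t) <= 1.
Proof.
  unfold sinc. destruct (Req_EM_T t 0); [rewrite Rabs_R1; lra |].
  apply Rabs_div_le; auto. rewrite Rmult_1_l. apply Rabs_sin_le.
Qed.

Lemma Rabs_cosm1_div_le (t : R) : Rabs (cosm1_div t) <= Rabs t.
Proof.
  unfold cosm1_div. destruct (Req_EM_T t 0); [rewrite Rabs_R0; apply Rabs_pos |].
  apply Rabs_div_le; auto. rewrite <- Rabs_sq. apply Rabs_cos_sub_1_le.
Qed.

Lemma Rabs_RInt_le_const (f : R -> R) (a M : R) : 0 <= a -> (forall x, continuous f x) ->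
  (forall t, 0 <= t <= a -> Rabs (f t) <= M) -> Rabs (RInt f 0 a) <= a * M.
Proof.
  intros Ha Hc Hb. replace a with (a - 0) at 2 by ring.
  apply (norm_RInt_le_const (V := R_NormedModule) f 0 a); [auto | |].
  - intros x Hx; apply Hb; lra.
  - apply (RInt_correct (V := R_CompleteNormedModule)), ex_RInt_continuous_R; auto.
Qed.

Lemma is_derive_RInt_0 (f : R -> R) (a : R) : (forall x, continuous f x) ->
  is_derive (fun x => RInt f 0 x) a (f a).
Proof.
  intros Hc. apply (is_derive_RInt f _ 0 a); auto.
  apply filter_forall. intros b.
  apply (RInt_correct (V := R_CompleteNormedModule)), ex_RInt_continuous_R; auto.
Qed.

Lemma is_derive_SinInt (a : R) : 0 < a -> is_derive SinInt a (sin a / a).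
Proof.
  intros Ha. replace (sin a / a) with (sinc a)
    by (unfold sinc; destruct (Req_EM_T a 0); [lra | auto]).
  apply is_derive_RInt_0, continuous_sinc.
Qed.

Lemma is_derive_CosInt (a : R) : 0 < a -> is_derive CosInt a (cos a / a).
Proof.
  intros Ha. unfold CosInt.
  replace (cos a / a) with (0 + / a + cosm1_div a)
    by (unfold cosm1_div; destruct (Req_EM_T a 0); [lra | field; lra]).
  apply is_derive_Reals.
  apply derivable_pt_lim_plus; [apply derivable_pt_lim_plus |].
  - apply derivable_pt_lim_const.
  - apply derivable_pt_lim_ln, Ha.
  - apply is_derive_Reals, is_derive_RInt_0, continuous_cosm1_div.
Qed.

(* The auxiliary functions f and g of the sine and cosine integrals
   (Abramowitz-Stegun 5.2.6). *)
Definition aux_f (a : R) : R := PI / 2 * cos a - cos a * SinInt a + sin a * CosInt a.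
Definition aux_g (a : R) : R := PI / 2 * sin a - cos a * CosInt a - sin a * SinInt a.

Lemma is_derive_aux_f (a : R) : 0 < a -> is_derive aux_f a (- aux_g a).
Proof.
  intros Ha. apply is_derive_Reals.
  assert (HS := proj1 (is_derive_Reals _ _ _) (is_derive_SinInt a Ha)).
  assert (HC := proj1 (is_derive_Reals _ _ _) (is_derive_CosInt a Ha)).
  assert (H := derivable_pt_lim_plus _ _ _ _ _
     (derivable_pt_lim_minus _ _ _ _ _ (derivable_pt_lim_scal _ (PI / 2) _ _ (derivable_pt_lim_cos a))
        (derivable_pt_lim_mult _ _ _ _ _ (derivable_pt_lim_cos a) HS))
     (derivable_pt_lim_mult _ _ _ _ _ (derivable_pt_lim_sin a) HC)).
  replace (- aux_g a) with (PI / 2 * - sin a - (- sin a * SinInt a + cos a * (sin a / a))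
                            + (cos a * CosInt a + sin a * (cos a / a))) by (unfold aux_g; field; lra).
  exact H.
Qed.

Lemma is_derive_aux_g (a : R) : 0 < a -> is_derive aux_g a (aux_f a - / a).
Proof.
  intros Ha. apply is_derive_Reals.
  assert (HS := proj1 (is_derive_Reals _ _ _) (is_derive_SinInt a Ha)).
  assert (HC := proj1 (is_derive_Reals _ _ _) (is_derive_CosInt a Ha)).
  assert (H := derivable_pt_lim_minus _ _ _ _ _
     (derivable_pt_lim_minus _ _ _ _ _ (derivable_pt_lim_scal _ (PI / 2) _ _ (derivable_pt_lim_sin a))
        (derivable_pt_lim_mult _ _ _ _ _ (derivable_pt_lim_cos a) HC))
     (derivable_pt_lim_mult _ _ _ _ _ (derivable_pt_lim_sin a) HS)).
  assert (Hcs := sin2_cos2 a). unfold Rsqr in Hcs.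
  replace (aux_f a - / a) with (PI / 2 * cos a - (- sin a * CosInt a + cos a * (cos a / a))
                                - (cos a * SinInt a + sin a * (sin a / a))).
  - exact H.
  - unfold aux_f. replace (/ a) with ((sin a * sin a + cos a * cos a) / a) by (rewrite Hcs; field; lra).
    field. lra.
Qed.

Lemma vanishes_at_0_lin (f : R -> R) (K : R) :
  (forall a, 0 < a < 1 -> Rabs (f a) <= K * a) -> vanishes_at_0 f.
Proof.
  intros H. apply (vanishes_at_0_le f (fun a => K * a)); auto.
  apply vanishes_at_0_scal, vanishes_at_0_id.
Qed.

Lemma vanishes_at_0_lin_ln (f : R -> R) (K : R) :
  (forall a, 0 < a < 1 -> Rabs (f a) <= K * a + Rabs (a * ln a)) -> vanishes_at_0 f.
Proof.
  intros H. apply (vanishes_at_0_le f (fun a => K * a + Rabs (a * ln a))); auto.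
  apply vanishes_at_0_plus; [apply vanishes_at_0_scal, vanishes_at_0_id |].
  apply vanishes_at_0_abs, vanishes_at_0_x_ln_x.
Qed.

Lemma Rabs_SinInt_le (a : R) : 0 <= a -> Rabs (SinInt a) <= a.
Proof.
  intros Ha. unfold SinInt. rewrite <- (Rmult_1_r a) at 2.
  apply Rabs_RInt_le_const; auto using continuous_sinc, Rabs_sinc_le.
Qed.

Lemma Rabs_RInt_cosm1_div_le (a : R) : 0 <= a -> Rabs (RInt cosm1_div 0 a) <= a * a.
Proof.
  intros Ha. apply Rabs_RInt_le_const; auto using continuous_cosm1_div.
  intros t Ht. eapply Rle_trans; [apply Rabs_cosm1_div_le | rewrite Rabs_right; lra].
Qed.

Lemma Rabs_mult_le (x y X Y : R) : Rabs x <= X -> Rabs y <= Y -> Rabs (x * y) <= X * Y.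
Proof. intros. rewrite Rabs_mult. apply Rmult_le_compat; auto using Rabs_pos. Qed.

Section SmallArguments.

Variable a : R.
Hypothesis Ha : 0 < a < 1.

Lemma Rabs_sin_small : Rabs (sin a) <= a.
Proof. eapply Rle_trans; [apply Rabs_sin_le | rewrite Rabs_right; lra]. Qed.

Lemma Rabs_cos_sub_1_small : Rabs (cos a - 1) <= a.
Proof. eapply Rle_trans; [apply Rabs_cos_sub_1_le | simpl; nra]. Qed.

Lemma Rabs_SinInt_small : Rabs (SinInt a) <= 1.
Proof. eapply Rle_trans; [apply Rabs_SinInt_le |]; lra. Qed.

Lemma Rabs_RInt_cosm1_div_small : Rabs (RInt cosm1_div 0 a) <= 1.
Proof. eapply Rle_trans; [apply Rabs_RInt_cosm1_div_le |]; nra. Qed.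

Lemma Rabs_mult_ln_small (x : R) : Rabs x <= a -> Rabs (x * ln a) <= Rabs (a * ln a).
Proof.
  intros Hx. rewrite !Rabs_mult, (Rabs_right a) by lra.
  apply Rmult_le_compat_r; auto using Rabs_pos.
Qed.

End SmallArguments.

Lemma aux_f_at_0 : vanishes_at_0 (fun a => aux_f a - PI / 2).
Proof.
  apply (vanishes_at_0_lin_ln _ (PI / 2 + 1 + (Rabs euler_gamma + 1))). intros a Ha.
  assert (Hpi : 0 < PI / 2) by (assert (H := PI_RGT_0); lra).
  assert (Hcos : Rabs (cos a) <= 1) by apply Rabs_le, COS_bound.
  assert (B1 : Rabs (PI / 2 * (cos a - 1)) <= PI / 2 * a).
  { rewrite Rabs_mult, (Rabs_right (PI / 2)) by lra.
    apply Rmult_le_compat_l; [lra | apply Rabs_cos_sub_1_small; auto]. }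
  assert (B2 : Rabs (cos a * SinInt a) <= 1 * a)
    by (apply Rabs_mult_le; auto; apply Rabs_SinInt_le; lra).
  assert (B3 : Rabs (sin a * (euler_gamma + RInt cosm1_div 0 a)) <= a * (Rabs euler_gamma + 1)).
  { apply Rabs_mult_le; [apply Rabs_sin_small; auto |].
    eapply Rle_trans; [apply Rabs_triang |].
    assert (H := Rabs_RInt_cosm1_div_small a Ha). lra. }
  assert (B4 := Rabs_mult_ln_small a Ha (sin a) (Rabs_sin_small a Ha)).
  replace (aux_f a - PI / 2) with (PI / 2 * (cos a - 1) - cos a * SinInt a
                                   + sin a * (euler_gamma + RInt cosm1_div 0 a) + sin a * ln a)
    by (unfold aux_f, CosInt; ring).
  apply Rabs_le_between in B1, B2, B3, B4. apply Rabs_le. split; lra.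
Qed.

Lemma aux_g_at_0 : vanishes_at_0 (fun a => aux_g a + ln a + euler_gamma).
Proof.
  apply (vanishes_at_0_lin_ln _ (PI / 2 + 1 + 1 + Rabs euler_gamma)). intros a Ha.
  assert (Hpi : 0 < PI / 2) by (assert (H := PI_RGT_0); lra).
  assert (Hcos : Rabs (cos a) <= 1) by apply Rabs_le, COS_bound.
  assert (B1 : Rabs (PI / 2 * sin a) <= PI / 2 * a).
  { rewrite Rabs_mult, (Rabs_right (PI / 2)) by lra.
    apply Rmult_le_compat_l; [lra | apply Rabs_sin_small; auto]. }
  assert (B2 : Rabs (sin a * SinInt a) <= a * 1)
    by (apply Rabs_mult_le; [apply Rabs_sin_small | apply Rabs_SinInt_small]; auto).
  assert (B3 : Rabs (cos a * RInt cosm1_div 0 a) <= 1 * (a * a))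
    by (apply Rabs_mult_le; [| apply Rabs_RInt_cosm1_div_le]; auto; lra).
  assert (Haa : a * a <= a * 1) by (apply Rmult_le_compat_l; lra).
  assert (B4 : Rabs ((cos a - 1) * euler_gamma) <= a * Rabs euler_gamma)
    by (apply Rabs_mult_le; [apply Rabs_cos_sub_1_small | ]; auto; lra).
  assert (B5 := Rabs_mult_ln_small a Ha (cos a - 1) (Rabs_cos_sub_1_small a Ha)).
  replace (aux_g a + ln a + euler_gamma) with (PI / 2 * sin a - sin a * SinInt a
    - cos a * RInt cosm1_div 0 a - (cos a - 1) * euler_gamma - (cos a - 1) * ln a)
    by (unfold aux_g, CosInt; ring).
  apply Rabs_le_between in B1, B2, B3, B4, B5. apply Rabs_le. split; lra.
Qed.

(** * Laplace-transform representations *)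

Definition damped (w : R -> R) (a v : R) : R := w v * exp (- a * v).

Definition kernel_f (v : R) : R := / (1 + v ^ 2).
Definition kernel_g (v : R) : R := v / (1 + v ^ 2).
Definition kernel_k (v : R) : R := 2 * v ^ 2 / (1 + v ^ 2) ^ 2.

(* The Laplace-transform representations of [aux_f] and [aux_g] (Abramowitz-Stegun 5.2.12). *)
Definition aux_f_int (a : R) : R := RInt_pinfty 0 (damped kernel_f a).
Definition aux_g_int (a : R) : R := RInt_pinfty 0 (damped kernel_g a).

Lemma one_plus_sq_pos (v : R) : 0 < 1 + v ^ 2.
Proof. assert (0 <= v ^ 2) by apply pow2_ge_0. lra. Qed.

Lemma kernel_f_bound (v : R) : 0 < kernel_f v <= 1.
Proof.
  unfold kernel_f. assert (H := one_plus_sq_pos v). assert (0 <= v ^ 2) by apply pow2_ge_0.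
  split; [apply Rinv_0_lt_compat; auto |].
  rewrite <- Rinv_1. apply Rinv_le_contravar; lra.
Qed.

Lemma kernel_g_bound (v : R) : 0 <= v -> 0 <= kernel_g v <= 1.
Proof.
  intros Hv. unfold kernel_g. assert (H := one_plus_sq_pos v).
  split; [apply Rdiv_le_0_compat; lra |].
  apply Rmult_le_reg_r with (1 + v ^ 2); auto. unfold Rdiv. rewrite Rmult_assoc, Rinv_l by lra. nra.
Qed.

Lemma ex_derive_kernel_f (v : R) : ex_derive kernel_f v.
Proof. unfold kernel_f. auto_derive. assert (H := one_plus_sq_pos v). lra. Qed.

Lemma ex_derive_kernel_g (v : R) : ex_derive kernel_g v.
Proof. unfold kernel_g. auto_derive. assert (H := one_plus_sq_pos v). lra. Qed.

Lemma continuous_kernel_f (v : R) : continuous kernel_f v.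
Proof.
  apply (ex_derive_continuous (K := R_AbsRing) (V := R_NormedModule)), ex_derive_kernel_f.
Qed.

Lemma continuous_damped (w : R -> R) (a x : R) :
  (forall y, ex_derive w y) -> continuous (damped w a) x.
Proof.
  intros Hw. apply (ex_derive_continuous (K := R_AbsRing) (V := R_NormedModule)).
  apply (ex_derive_mult w (fun v => exp (- a * v))); auto. auto_derive; auto.
Qed.

Lemma is_derive_atan_kernel_f (x : R) : is_derive atan x (kernel_f x).
Proof.
  assert (H := is_derive_atan x). unfold Rsqr in H. unfold kernel_f.
  now replace (x ^ 2) with (x * x) by ring.
Qed.

Lemma is_RInt_pinfty_kernel_f : is_RInt_pinfty 0 kernel_f (PI / 2).
Proof.
  replace (PI / 2) with (PI / 2 - atan 0) by (rewrite atan_0; ring).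
  apply is_RInt_pinfty_derive; auto using is_derive_atan_kernel_f, continuous_kernel_f.
  apply is_lim_atan_pinfty.
Qed.

Lemma ex_is_RInt_pinfty_damped (w : R -> R) (a B : R) : 0 < a -> (forall y, ex_derive w y) ->
  (forall v, 0 <= v -> 0 <= w v <= B) -> exists L, is_RInt_pinfty 0 (damped w a) L.
Proof.
  intros Ha Hw Hb.
  apply ex_is_RInt_pinfty_dominated with (fun v => B * exp (- a * v)) (B * / a).
  - intros x _. apply continuous_damped; auto.
  - intros x Hx. specialize (Hb x Hx). unfold damped.
    rewrite Rabs_mult, (Rabs_right (exp _)) by (left; apply exp_pos).
    rewrite Rabs_right by lra. apply Rmult_le_compat_r; [left; apply exp_pos | lra].
  - apply is_RInt_pinfty_scal, is_RInt_pinfty_exp; auto.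
Qed.

Lemma is_RInt_pinfty_aux_f_int (a : R) : 0 < a ->
  is_RInt_pinfty 0 (damped kernel_f a) (aux_f_int a).
Proof.
  intros Ha. apply RInt_pinfty_correct, (ex_is_RInt_pinfty_damped kernel_f a 1); auto.
  - apply ex_derive_kernel_f.
  - intros v _. assert (H := kernel_f_bound v). lra.
Qed.

Lemma is_RInt_pinfty_aux_g_int (a : R) : 0 < a ->
  is_RInt_pinfty 0 (damped kernel_g a) (aux_g_int a).
Proof.
  intros Ha. apply RInt_pinfty_correct, (ex_is_RInt_pinfty_damped kernel_g a 1); auto.
  - apply ex_derive_kernel_g.
  - apply kernel_g_bound.
Qed.

Lemma aux_f_int_pos (a : R) : 0 < a -> 0 < aux_f_int a.
Proof.
  intros Ha.
  assert (Hpos : forall x, 0 < damped kernel_f a x).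
  { intros x. apply Rmult_lt_0_compat; [apply kernel_f_bound | apply exp_pos]. }
  apply (is_RInt_pinfty_gt_0 0 (damped kernel_f a) 1); auto using is_RInt_pinfty_aux_f_int.
  - lra.
  - intros x _. left; auto.
  - intros x _. apply continuous_damped, ex_derive_kernel_f.
Qed.

Lemma is_lim_kernel_f : is_lim kernel_f p_infty 0.
Proof.
  apply is_lim_pinfty_eps. intros eps. exists (/ eps + 1). intros x Hx.
  assert (He := cond_pos eps). assert (Hie : 0 < / eps) by (apply Rinv_0_lt_compat; auto).
  assert (H := kernel_f_bound x). unfold kernel_f in *.
  rewrite Rminus_0_r, Rabs_right by lra.
  assert (Hx2 : / eps < 1 + x ^ 2) by nra.
  apply Rinv_lt_contravar in Hx2; [| nra]. now rewrite Rinv_inv in Hx2.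
Qed.

(* Integration by parts against [- v e^(-av) / (1 + v^2)]. *)
Lemma is_RInt_pinfty_damped_kernel_k (a : R) : 0 < a ->
  is_RInt_pinfty 0 (damped kernel_k a) (aux_f_int a - a * aux_g_int a).
Proof.
  intros Ha.
  set (F := fun v => - (v * exp (- a * v)) * kernel_f v).
  assert (HF : is_RInt_pinfty 0 (fun v => damped kernel_k a v - damped kernel_f a v
                                          + a * damped kernel_g a v) (0 - F 0)).
  { apply is_RInt_pinfty_derive.
    - intros x _. unfold F, damped, kernel_k, kernel_f, kernel_g.
      assert (H := one_plus_sq_pos x). auto_derive; [lra | field; lra].
    - intros x _. apply (ex_derive_continuous (K := R_AbsRing) (V := R_NormedModule)).
      unfold damped, kernel_k, kernel_f, kernel_g.
      assert (H := one_plus_sq_pos x). auto_derive. repeat split; try lra; nra.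
    - unfold F. replace (Finite 0) with (Rbar_mult (Rbar_opp 0) 0) by (simpl; f_equal; ring).
      apply (is_lim_mult (fun v => - (v * exp (- a * v))) kernel_f p_infty (Rbar_opp 0) 0);
        [apply (is_lim_opp (fun v => v * exp (- a * v)) p_infty 0), is_lim_xexp_neg; auto |
         apply is_lim_kernel_f | simpl; auto]. }
  unfold F in HF. replace (- (0 * exp (- a * 0)) * kernel_f 0) with 0 in HF by ring.
  replace (aux_f_int a - a * aux_g_int a) with ((0 - 0) + aux_f_int a - a * aux_g_int a) by ring.
  apply is_RInt_pinfty_ext with (fun v => (damped kernel_k a v - damped kernel_f a v
                                           + a * damped kernel_g a v)
                                          + damped kernel_f a v - a * damped kernel_g a v);
    [intros; ring |].
  apply is_RInt_pinfty_minus; [apply is_RInt_pinfty_plus |]; auto using is_RInt_pinfty_aux_f_int.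
  apply is_RInt_pinfty_scal, is_RInt_pinfty_aux_g_int; auto.
Qed.

Lemma damped_taylor_bound (w : R -> R) (a x v : R) :
  0 < a -> Rabs (x - a) < a / 2 -> 0 <= v -> 0 <= w v <= 1 ->
  Rabs (damped w x v - damped w a v - (x - a) * (- (v * w v) * exp (- a * v)))
    <= (x - a) ^ 2 * (v ^ 2 * exp (- (a / 2) * v)).
Proof.
  intros Ha Hx Hv Hw. unfold damped.
  assert (Hab : forall t, Rmin a x <= t <= Rmax a x -> a / 2 <= t).
  { intros t Ht. apply Rabs_def2 in Hx. unfold Rmin in Ht. destruct (Rle_dec a x); lra. }
  assert (T : Rabs (exp (- x * v) - exp (- a * v) - (x - a) * (- v * exp (- a * v))) <=
              v ^ 2 * exp (- (a / 2) * v) * (x - a) ^ 2).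
  { apply (taylor2_bound (fun t => exp (- t * v)) (fun t => - v * exp (- t * v))
                         (fun t => v ^ 2 * exp (- t * v))).
    - intros t _. auto_derive; auto. ring.
    - intros t _. auto_derive; auto. ring.
    - intros t Ht. specialize (Hab t Ht).
      assert (0 < exp (- t * v)) by apply exp_pos. assert (0 <= v ^ 2) by apply pow2_ge_0.
      rewrite Rabs_right by nra.
      apply Rmult_le_compat_l; auto. apply exp_le. nra. }
  replace (w v * exp (- x * v) - w v * exp (- a * v) - (x - a) * (- (v * w v) * exp (- a * v)))
    with (w v * (exp (- x * v) - exp (- a * v) - (x - a) * (- v * exp (- a * v)))) by ring.
  rewrite Rabs_mult, (Rabs_right (w v)) by lra.
  assert (0 <= Rabs (exp (- x * v) - exp (- a * v) - (x - a) * (- v * exp (- a * v))))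
    by apply Rabs_pos.
  apply Rle_trans with (1 * (v ^ 2 * exp (- (a / 2) * v) * (x - a) ^ 2));
    [apply Rmult_le_compat; lra | lra].
Qed.

Lemma is_derive_damped_int (w : R -> R) (a J : R) (I : R -> R) :
  0 < a -> (forall v, 0 <= v -> 0 <= w v <= 1) ->
  (forall x, 0 < x -> is_RInt_pinfty 0 (damped w x) (I x)) ->
  is_RInt_pinfty 0 (fun v => - (v * w v) * exp (- a * v)) J -> is_derive I a J.
Proof.
  intros Ha Hw HI HJ.
  apply (is_derive_RInt_pinfty_param 0 a (a / 2) J (2 / (a / 2) ^ 3) (damped w) I
           (fun v => - (v * w v) * exp (- a * v)) (fun v => v ^ 2 * exp (- (a / 2) * v)));
    auto.
  - lra.
  - intros x Hx. apply HI. apply Rabs_def2 in Hx. lra.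
  - apply is_RInt_pinfty_x2exp. lra.
  - intros x v Hx Hv. apply damped_taylor_bound; auto.
Qed.

Lemma is_derive_aux_f_int (a : R) : 0 < a -> is_derive aux_f_int a (- aux_g_int a).
Proof.
  intros Ha. apply (is_derive_damped_int kernel_f); auto using is_RInt_pinfty_aux_f_int.
  - intros v _. assert (H := kernel_f_bound v). lra.
  - apply is_RInt_pinfty_ext with (fun v => - damped kernel_g a v).
    + intros x _. unfold damped, kernel_g, kernel_f. unfold Rdiv. ring.
    + apply is_RInt_pinfty_opp, is_RInt_pinfty_aux_g_int; auto.
Qed.

Lemma is_derive_aux_g_int (a : R) : 0 < a -> is_derive aux_g_int a (aux_f_int a - / a).
Proof.
  intros Ha. apply (is_derive_damped_int kernel_g); auto using kernel_g_bound, is_RInt_pinfty_aux_g_int.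
  apply is_RInt_pinfty_ext with (fun v => damped kernel_f a v - exp (- a * v)).
  - intros x _. unfold damped, kernel_g, kernel_f.
    assert (H := one_plus_sq_pos x). field. lra.
  - apply is_RInt_pinfty_minus; auto using is_RInt_pinfty_aux_f_int, is_RInt_pinfty_exp.
Qed.

Lemma atan_le (y : R) : 0 <= y -> atan y <= y.
Proof.
  intros Hy. assert (H := mvt_bound atan kernel_f 0 y 1).
  rewrite atan_0, !Rminus_0_r, (Rabs_right y), Rmult_1_l in H by lra.
  apply Rabs_le_between in H; [lra | |]; intros t _.
  - apply is_derive_atan_kernel_f.
  - assert (Hb := kernel_f_bound t). rewrite Rabs_right; lra.
Qed.

Lemma RInt_le_lin (f : R -> R) (k t : R) : 0 <= t -> (forall x, continuous f x) ->
  (forall v, 0 <= v <= t -> Rabs (f v) <= k * v) -> RInt f 0 t <= k * t * t.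
Proof.
  intros Ht Hc Hb. assert (Hk : 0 <= k * t) by (eapply Rle_trans; [apply Rabs_pos | apply (Hb t); lra]).
  eapply Rle_trans; [apply RRle_abs |].
  replace (k * t * t) with (t * (k * t)) by ring.
  apply Rabs_RInt_le_const; auto. intros v Hv.
  eapply Rle_trans; [apply Hb; lra |].
  destruct (Req_dec t 0) as [-> | Ht0]; [replace v with 0 by lra; lra |].
  assert (0 <= k) by (apply (Rmult_le_reg_r t); [lra | rewrite Rmult_0_l; lra]).
  apply Rmult_le_compat_l; lra.
Qed.

Definition damped_gap (a v : R) : R := kernel_f v * (1 - exp (- a * v)).

Lemma continuous_damped_gap (a x : R) : continuous (damped_gap a) x.
Proof.
  apply (ex_derive_continuous (K := R_AbsRing) (V := R_NormedModule)).
  apply (ex_derive_mult kernel_f (fun v => 1 - exp (- a * v))); [apply ex_derive_kernel_f |].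
  auto_derive; auto.
Qed.

Lemma damped_gap_bound (a v : R) : 0 <= a -> 0 <= v ->
  0 <= damped_gap a v <= a * v /\ damped_gap a v <= kernel_f v.
Proof.
  intros Ha Hv. unfold damped_gap. assert (H1 := kernel_f_bound v).
  assert (H2 := exp_ineq1_le (- a * v)).
  assert (exp (- a * v) <= 1) by (rewrite <- exp_0; apply exp_le; nra).
  assert (0 < exp (- a * v)) by apply exp_pos. nra.
Qed.

(* Split [int_0^oo damped_gap a] at [R0]: the integrand is at most [a v] before and at most
   [1 / (1 + v^2)] after. *)
Lemma aux_f_int_gap_bound (a R0 : R) : 0 < a -> 0 < R0 ->
  0 <= PI / 2 - aux_f_int a <= a * R0 * R0 + / R0.
Proof.
  intros Ha HR.
  assert (Hgap : is_RInt_pinfty 0 (damped_gap a) (PI / 2 - aux_f_int a)).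
  { apply is_RInt_pinfty_ext with (fun v => kernel_f v - damped kernel_f a v);
      [intros; unfold damped_gap, damped; ring |].
    apply is_RInt_pinfty_minus; auto using is_RInt_pinfty_kernel_f, is_RInt_pinfty_aux_f_int. }
  assert (Hc := continuous_damped_gap a).
  assert (Hp : forall v, 0 <= v -> 0 <= damped_gap a v <= a * v /\ damped_gap a v <= kernel_f v)
    by (intros; apply damped_gap_bound; lra).
  assert (Hhead : forall t, 0 <= t <= R0 -> RInt (damped_gap a) 0 t <= a * R0 * R0).
  { intros t Ht. eapply Rle_trans; [apply (RInt_le_lin _ a); auto; [lra |] |].
    - intros v Hv. destruct (Hp v ltac:(lra)) as [Hv1 _]. rewrite Rabs_right; lra.
    - apply Rmult_le_compat; nra. }
  split.
  - apply (is_RInt_pinfty_ge_bound 0 (damped_gap a)); auto. intros b Hb.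
    apply RInt_ge_0; auto using ex_RInt_continuous_R. intros x Hx; apply Hp; lra.
  - apply (is_RInt_pinfty_le_bound 0 (damped_gap a)); auto. intros b Hb.
    assert (Hinv : 0 < / R0) by (apply Rinv_0_lt_compat; lra).
    destruct (Rle_dec b R0); [specialize (Hhead b ltac:(lra)); lra |].
    rewrite <- (RInt_Chasles (damped_gap a) 0 R0 b) by (apply ex_RInt_continuous_R; auto).
    unfold plus; simpl. specialize (Hhead R0 ltac:(lra)).
    assert (Htail : RInt (damped_gap a) R0 b <= atan b - atan R0).
    { rewrite <- (is_RInt_unique kernel_f R0 b (atan b - atan R0))
        by (apply (is_RInt_derive atan kernel_f); auto using is_derive_atan_kernel_f, continuous_kernel_f).
      apply RInt_le; auto using ex_RInt_continuous_R, continuous_kernel_f; [lra |].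
      intros x Hx. apply Hp; lra. }
    assert (atan b < PI / 2) by apply atan_bound.
    assert (PI / 2 - atan R0 = atan (/ R0)) by (rewrite atan_inv; auto; ring).
    assert (atan (/ R0) <= / R0) by (apply atan_le; lra).
    lra.
Qed.

Lemma aux_f_int_at_0 : vanishes_at_0 (fun a => aux_f_int a - PI / 2).
Proof.
  intros eps Heps. set (R0 := 2 / eps).
  assert (HR : 0 < R0) by (apply Rdiv_lt_0_compat; lra).
  exists (eps / (2 * R0 * R0)). split; [apply Rdiv_lt_0_compat; nra |].
  intros a [Ha Had]. destruct (aux_f_int_gap_bound a R0 Ha HR) as [Hlo Hhi].
  rewrite Rabs_left1 by lra.
  apply Rmult_lt_compat_r with (r := 2 * R0 * R0) in Had; [| nra].
  replace (eps / (2 * R0 * R0) * (2 * R0 * R0)) with eps in Had by (field; lra).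
  assert (/ R0 = eps / 2) by (unfold R0; field; lra).
  nra.
Qed.

(** * An integral formula for Euler's constant *)

Definition one_sub_exp_div (t : R) : R := if Req_EM_T t 0 then 1 else (1 - exp (- t)) / t.
Definition exp_neg_div (t : R) : R := exp (- t) / t.

Definition euler_gamma_int : R := RInt one_sub_exp_div 0 1 - RInt_pinfty 1 exp_neg_div.

Lemma continuous_one_sub_exp_div (x : R) : continuous one_sub_exp_div x.
Proof.
  apply (continuous_removable (fun t => 1 - exp (- t)) 1 3).
  - intros y. apply derivable_pt_minus; [apply derivable_pt_const |].
    apply derivable_pt_comp; [apply derivable_pt_opp, derivable_pt_id | apply derivable_pt_exp].
  - intros t Ht.
    replace (1 - exp (- t) - 1 * t) with (- (exp (- t) - exp (- 0) - (t - 0) * - exp (- 0)))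
      by (rewrite Ropp_0, exp_0; ring).
    rewrite Rabs_Ropp. replace (t ^ 2) with ((t - 0) ^ 2) by ring.
    apply (taylor2_bound (fun s => exp (- s)) (fun s => - exp (- s)) (fun s => exp (- s))).
    + intros; auto_derive; auto; ring.
    + intros; auto_derive; auto; ring.
    + intros s Hs. rewrite Rabs_right by (left; apply exp_pos).
      assert (Rmin 0 t >= -1) by (apply Rabs_le_between in Ht; unfold Rmin; destruct (Rle_dec 0 t); lra).
      apply Rle_trans with (exp 1); [apply exp_le; lra | apply exp_le_3].
Qed.

Lemma one_sub_exp_div_bound (t : R) : 0 <= t -> 0 <= one_sub_exp_div t <= 1.
Proof.
  intros Ht. unfold one_sub_exp_div. destruct (Req_EM_T t 0); [lra |].
  assert (H1 := exp_ineq1_le (- t)). assert (exp (- t) <= 1) by (rewrite <- exp_0; apply exp_le; lra).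
  split; [apply Rdiv_le_0_compat; lra |].
  apply Rmult_le_reg_r with t; [lra |]. unfold Rdiv. rewrite Rmult_assoc, Rinv_l by lra. lra.
Qed.

Lemma continuous_exp_neg_div (x : R) : 0 < x -> continuous exp_neg_div x.
Proof.
  intros Hx. apply (ex_derive_continuous (K := R_AbsRing) (V := R_NormedModule)).
  unfold exp_neg_div. auto_derive. lra.
Qed.

Lemma is_RInt_pinfty_exp_neg_div : is_RInt_pinfty 1 exp_neg_div (RInt_pinfty 1 exp_neg_div).
Proof.
  apply RInt_pinfty_correct.
  apply (ex_is_RInt_pinfty_dominated 1 _ (fun t => exp (- 1 * t))
           (/ 1 - RInt (fun t => exp (- 1 * t)) 0 1)).
  - intros; apply continuous_exp_neg_div; lra.
  - intros x Hx. unfold exp_neg_div. replace (- 1 * x) with (- x) by ring.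
    assert (0 < exp (- x)) by apply exp_pos.
    apply Rabs_div_le; [lra |]. rewrite Rabs_right, (Rabs_right x) by lra.
    rewrite <- (Rmult_1_r (exp (- x))) at 1. apply Rmult_le_compat_l; lra.
  - apply is_RInt_pinfty_Chasles_r; [lra |]. apply is_RInt_pinfty_exp; lra.
Qed.

Lemma bernoulli_ineq (h : R) (n : nat) : -1 <= h -> 1 + INR n * h <= (1 + h) ^ n.
Proof.
  intros Hh. induction n as [| n IH]; [simpl; lra |].
  rewrite S_INR. simpl. assert (0 <= INR n) by apply pos_INR.
  apply Rle_trans with ((1 + h) * (1 + INR n * h)); [nra |].
  apply Rmult_le_compat_l; lra.
Qed.

Lemma exp_pow (y : R) (n : nat) : exp y ^ n = exp (INR n * y).
Proof.
  induction n as [| n IH]; [simpl; rewrite Rmult_0_l, exp_0; auto |].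
  rewrite S_INR. simpl. rewrite IH, <- exp_plus. f_equal. ring.
Qed.

(* Both bounds come from [1 - x <= e^(-x)] and [1 - x^2 <= (1 - x) e^x], the latter raised to
   the power [m] with Bernoulli's inequality. *)
Lemma exp_neg_sub_pow_bounds (m : nat) (t : R) : (1 <= m)%nat -> 0 <= t <= INR m ->
  0 <= exp (- t) - (1 - t / INR m) ^ m <= t ^ 2 * exp (- t) / INR m.
Proof.
  intros Hm Ht. remember (INR m) as N eqn:HNm.
  assert (HN : 1 <= N) by (rewrite HNm; apply (le_INR 1 m) in Hm; simpl in Hm; auto).
  remember (t / N) as x eqn:Hxd.
  assert (Hx : 0 <= x <= 1).
  { rewrite Hxd. split; [apply Rdiv_le_0_compat; lra |].
    apply Rmult_le_reg_r with N; [lra |]. unfold Rdiv. rewrite Rmult_assoc, Rinv_l by lra. lra. }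
  assert (Et : t = N * x) by (rewrite Hxd; field; lra).
  split.
  - replace (exp (- t)) with (exp (- x) ^ m) by (rewrite exp_pow, <- HNm, Et; f_equal; ring).
    assert ((1 - x) ^ m <= exp (- x) ^ m); [| lra].
    apply pow_incr. assert (H := exp_ineq1_le (- x)). lra.
  - assert (H1 : 1 - x ^ 2 <= (1 - x) * exp x) by (assert (H := exp_ineq1_le x); nra).
    assert (H2 : (1 - x ^ 2) ^ m <= ((1 - x) * exp x) ^ m) by (apply pow_incr; nra).
    assert (H3 : 1 + INR m * (- x ^ 2) <= (1 - x ^ 2) ^ m).
    { replace (1 - x ^ 2) with (1 + - x ^ 2) by ring. apply bernoulli_ineq. nra. }
    rewrite Rpow_mult_distr, exp_pow, <- HNm in H2. rewrite <- HNm in H3.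
    assert (E2 : exp (N * x) * exp (- t) = 1) by (rewrite <- exp_plus, Et, Rplus_opp_r; apply exp_0).
    assert (Hpos : 0 < exp (- t)) by apply exp_pos.
    assert (H4 : (1 - N * x ^ 2) * exp (- t) <= (1 - x) ^ m).
    { apply Rmult_le_compat_r with (r := exp (- t)) in H2; [| lra].
      rewrite Rmult_assoc, E2, Rmult_1_r in H2. nra. }
    replace (N * x ^ 2) with (t ^ 2 / N) in H4 by (rewrite Et; field; lra).
    unfold Rdiv in *. nra.
Qed.

(* [H_m = int_0^m (1 - (1 - t/m)^m) / t dt]; the geometric-sum form of the integrand has no
   singularity at [0]. *)
Definition harmonic_integrand (m : nat) (t : R) : R :=
  sum_f_R0 (fun k => (1 - t / INR m) ^ k / INR m) (pred m).

Lemma is_RInt_pow_lin (N : R) (k : nat) : 0 < N ->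
  is_RInt (fun t => (1 - t / N) ^ k / N) 0 N (/ INR (S k)).
Proof.
  intros HN. assert (HS : 0 < INR (S k)) by (apply lt_0_INR; lia).
  replace (/ INR (S k)) with (minus (- (1 - N / N) ^ S k / INR (S k)) (- (1 - 0 / N) ^ S k / INR (S k))).
  2:{ replace (1 - N / N) with 0 by (field; lra). replace (1 - 0 / N) with 1 by (field; lra).
      rewrite pow1, pow_i by lia. unfold minus, plus, opp; simpl. field.
      change (match k with 0%nat => 1 | S _ => INR k + 1 end) with (INR (S k)). lra. }
  apply (is_RInt_derive (fun t => - (1 - t / N) ^ S k / INR (S k))).
  - intros x _. auto_derive; [auto |].
    change (match k with 0%nat => 1 | S _ => INR k + 1 end) with (INR (S k)).
    replace (1 + - (x * / N)) with (1 - x / N) by (unfold Rdiv; ring). field. lra.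
  - intros x _. apply (ex_derive_continuous (K := R_AbsRing) (V := R_NormedModule)).
    auto_derive. lra.
Qed.

Lemma continuous_xexp (x : R) : continuous (fun v => v * exp (- 1 * v)) x.
Proof. apply (ex_derive_continuous (K := R_AbsRing) (V := R_NormedModule)). auto_derive. auto. Qed.

Lemma RInt_scal_R (f : R -> R) (k a b : R) : ex_RInt f a b ->
  RInt (fun v => k * f v) a b = k * RInt f a b.
Proof. intros H. apply (RInt_scal (V := R_CompleteNormedModule)), H. Qed.

Lemma RInt_xexp_le_1 (N : R) : 1 <= N -> RInt (fun v => v * exp (- 1 * v)) 1 N <= 1.
Proof.
  intros HN.
  assert (Hpos : forall v, 0 <= v -> 0 <= v * exp (- 1 * v))
    by (intros; apply Rmult_le_pos; [lra | left; apply exp_pos]).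
  assert (Hxe := is_RInt_pinfty_xexp 1 ltac:(lra)). replace (/ 1 ^ 2) with 1 in Hxe by field.
  assert (H0N := RInt_le_is_RInt_pinfty 0 _ 1 N Hpos Hxe ltac:(lra)).
  rewrite <- (RInt_Chasles _ 0 1 N) in H0N by (apply ex_RInt_continuous_R, continuous_xexp).
  assert (0 <= RInt (fun v => v * exp (- 1 * v)) 0 1).
  { apply RInt_ge_0; [lra | apply ex_RInt_continuous_R, continuous_xexp |].
    intros x Hx; apply Hpos; lra. }
  unfold plus in H0N; simpl in H0N. lra.
Qed.

Section Harmonic.

Variable m : nat.
Hypothesis Hm : (1 <= m)%nat.
Local Notation N := (INR m).

Lemma INR_ge_1 : 1 <= N.
Proof. apply (le_INR 1 m) in Hm. simpl in Hm. auto. Qed.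

Lemma is_RInt_harmonic_integrand : is_RInt (harmonic_integrand m) 0 N (harmonic m).
Proof.
  assert (HN := INR_ge_1). unfold harmonic_integrand, harmonic.
  induction (pred m) as [| j IH]; [apply is_RInt_pow_lin; lra |].
  apply (is_RInt_plus _ (fun t => (1 - t / N) ^ S j / N)); auto.
  apply is_RInt_pow_lin; lra.
Qed.

Lemma ex_RInt_harmonic_integrand (u v : R) :
  0 <= u <= v -> v <= N -> ex_RInt (harmonic_integrand m) u v.
Proof.
  intros Hu Hv. apply (ex_RInt_Chasles_2 (V := R_CompleteNormedModule) _ 0 u v); [lra |].
  apply (ex_RInt_Chasles_1 (V := R_CompleteNormedModule) _ 0 v N); [lra |]. eexists; apply is_RInt_harmonic_integrand.
Qed.

Lemma harmonic_integrand_eq (t : R) :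
  t <> 0 -> harmonic_integrand m t = (1 - (1 - t / N) ^ m) / t.
Proof.
  intros Ht. assert (HN := INR_ge_1). unfold harmonic_integrand.
  replace (sum_f_R0 (fun k => (1 - t / N) ^ k / N) (pred m))
    with (sum_f_R0 (fun k => (1 - t / N) ^ k) (pred m) / N)
    by (induction (pred m) as [| j IH]; simpl; [| rewrite <- IH]; unfold Rdiv; ring).
  rewrite tech3.
  - replace (S (pred m)) with m by lia. field. lra.
  - intros E. apply Ht. apply (Rmult_eq_reg_r (/ N)); [| apply Rinv_neq_0_compat; lra].
    unfold Rdiv in E. lra.
Qed.

Lemma harmonic_integrand_0 : harmonic_integrand m 0 = 1.
Proof.
  assert (HN := INR_ge_1). unfold harmonic_integrand.
  rewrite (sum_eq _ (fun _ => / N)) by (intros; unfold Rdiv; rewrite Rmult_0_l, Rminus_0_r, pow1; ring).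
  rewrite sum_cte. replace (S (pred m)) with m by lia. field. lra.
Qed.

Lemma RInt_harmonic_integrand_head :
  Rabs (RInt (harmonic_integrand m) 0 1 - RInt one_sub_exp_div 0 1) <= 1 / N.
Proof.
  assert (HN := INR_ge_1).
  assert (Ex : ex_RInt (harmonic_integrand m) 0 1) by (apply ex_RInt_harmonic_integrand; lra).
  assert (Exq : ex_RInt one_sub_exp_div 0 1)
    by (apply ex_RInt_continuous_R, continuous_one_sub_exp_div).
  rewrite <- (RInt_minus (harmonic_integrand m) one_sub_exp_div) by auto.
  replace (1 / N) with ((1 - 0) * (1 / N)) by ring.
  apply (norm_RInt_le_const (V := R_NormedModule)
           (fun t => minus (harmonic_integrand m t) (one_sub_exp_div t)) 0 1); [lra | |].
  - intros t Ht. unfold norm, minus, plus, opp; simpl; unfold abs; simpl.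
    destruct (Req_dec t 0) as [-> | E].
    + rewrite harmonic_integrand_0. unfold one_sub_exp_div.
      destruct (Req_EM_T 0 0); [| congruence].
      rewrite Rplus_opp_r, Rabs_R0. apply Rlt_le, Rdiv_lt_0_compat; lra.
    + rewrite harmonic_integrand_eq by auto. unfold one_sub_exp_div.
      destruct (Req_EM_T t 0); [congruence |].
      replace ((1 - (1 - t / N) ^ m) / t + - ((1 - exp (- t)) / t))
        with ((exp (- t) - (1 - t / N) ^ m) / t) by (field; auto).
      assert (K := exp_neg_sub_pow_bounds m t Hm ltac:(lra)).
      apply Rabs_div_le; auto. rewrite Rabs_right, (Rabs_right t) by lra.
      assert (exp (- t) <= 1) by (rewrite <- exp_0; apply exp_le; lra).
      apply Rle_trans with (t ^ 2 * exp (- t) / N); [lra |].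
      unfold Rdiv. replace (1 * / N * t) with (t * 1 * / N) by ring.
      apply Rmult_le_compat_r; [left; apply Rinv_0_lt_compat; lra |].
      assert (0 < exp (- t)) by apply exp_pos. simpl. nra.
  - apply (RInt_correct (V := R_CompleteNormedModule)), (ex_RInt_minus (V := R_NormedModule)); auto.
Qed.

Lemma continuous_pow_lin_div (x : R) : 0 < x -> continuous (fun t => (1 - t / N) ^ m / t) x.
Proof.
  intros Hx. assert (HN := INR_ge_1).
  apply (ex_derive_continuous (K := R_AbsRing) (V := R_NormedModule)). auto_derive. lra.
Qed.

Lemma ex_RInt_continuous_pos (f : R -> R) (u v : R) : (forall x, 0 < x -> continuous f x) -> 0 < u <= v ->
  ex_RInt f u v.
Proof.
  intros Hc Huv. apply (ex_RInt_continuous (V := R_CompleteNormedModule)). intros z Hz.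
  rewrite Rmin_left, Rmax_right in Hz by lra. apply Hc. lra.
Qed.

Lemma RInt_harmonic_integrand_tail :
  RInt (harmonic_integrand m) 1 N = ln N - RInt (fun t => (1 - t / N) ^ m / t) 1 N.
Proof.
  assert (HN := INR_ge_1).
  assert (Hinv : forall x, 0 < x -> continuous (fun t => / t) x).
  { intros x Hx. apply (ex_derive_continuous (K := R_AbsRing) (V := R_NormedModule)).
    auto_derive. lra. }
  replace (ln N) with (RInt (fun t => / t) 1 N).
  - rewrite <- (RInt_minus (fun t => / t))
      by (apply ex_RInt_continuous_pos; auto using continuous_pow_lin_div; lra).
    apply RInt_ext. intros x Hx. rewrite Rmin_left, Rmax_right in Hx by lra.
    rewrite harmonic_integrand_eq by lra. unfold minus, plus, opp; simpl. field. lra.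
  - apply is_RInt_unique. replace (ln N) with (minus (ln N) (ln 1))
      by (unfold minus, plus, opp; simpl; rewrite ln_1; ring).
    apply (is_RInt_derive ln (fun t => / t)); intros x Hx; rewrite Rmin_left in Hx by lra;
      [apply is_derive_ln | apply Hinv]; lra.
Qed.

Lemma exp_neg_div_sub_pow_bounds (x : R) : 1 <= x <= N ->
  0 <= exp_neg_div x - (1 - x / N) ^ m / x <= / N * (x * exp (- 1 * x)).
Proof.
  intros Hx. assert (K := exp_neg_sub_pow_bounds m x Hm ltac:(lra)).
  unfold exp_neg_div. replace (- 1 * x) with (- x) by ring.
  replace (exp (- x) / x - (1 - x / N) ^ m / x) with ((exp (- x) - (1 - x / N) ^ m) / x)
    by (field; lra).
  split; [apply Rdiv_le_0_compat; lra |].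
  apply Rmult_le_reg_r with x; [lra |]. unfold Rdiv. rewrite Rmult_assoc, Rinv_l by lra.
  unfold Rdiv in K. replace (/ N * (x * exp (- x)) * x) with (x ^ 2 * exp (- x) * / N) by ring.
  lra.
Qed.

Lemma RInt_exp_neg_div_tail :
  0 <= RInt exp_neg_div 1 N - RInt (fun t => (1 - t / N) ^ m / t) 1 N <= 1 / N.
Proof.
  assert (HN := INR_ge_1).
  assert (ExE : ex_RInt exp_neg_div 1 N) by (apply ex_RInt_continuous_pos; auto using continuous_exp_neg_div; lra).
  assert (ExR : ex_RInt (fun t => (1 - t / N) ^ m / t) 1 N)
    by (apply ex_RInt_continuous_pos; auto using continuous_pow_lin_div; lra).
  rewrite <- (RInt_minus exp_neg_div) by auto.
  assert (Exd : ex_RInt (fun t => minus (exp_neg_div t) ((1 - t / N) ^ m / t)) 1 N)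
    by (apply (ex_RInt_minus (V := R_NormedModule)); auto).
  split.
  - apply RInt_ge_0; [lra | exact Exd |]. intros t Ht. apply exp_neg_div_sub_pow_bounds. lra.
  - apply Rle_trans with (RInt (fun v => / N * (v * exp (- 1 * v))) 1 N).
    + apply RInt_le; [lra | exact Exd | |].
      { apply ex_RInt_continuous_R. intros x.
        apply (continuous_scal_r (/ N) (fun v => v * exp (- 1 * v))), continuous_xexp. }
      intros t Ht. apply exp_neg_div_sub_pow_bounds. lra.
    + rewrite RInt_scal_R by (apply ex_RInt_continuous_R, continuous_xexp).
      replace (1 / N) with (/ N * 1) by (field; lra).
      apply Rmult_le_compat_l; [left; apply Rinv_0_lt_compat; lra | apply RInt_xexp_le_1; lra].
Qed.

Lemma harmonic_sub_ln_bound :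
  Rabs (harmonic m - ln N - euler_gamma_int)
    <= 2 / N + Rabs (RInt_pinfty 1 exp_neg_div - RInt exp_neg_div 1 N).
Proof.
  assert (HN := INR_ge_1).
  assert (Hh : harmonic m = RInt (harmonic_integrand m) 0 1 + RInt (harmonic_integrand m) 1 N).
  { rewrite <- (is_RInt_unique _ _ _ _ is_RInt_harmonic_integrand).
    rewrite <- (RInt_Chasles _ 0 1 N); [reflexivity | |]; apply ex_RInt_harmonic_integrand; lra. }
  rewrite Hh, RInt_harmonic_integrand_tail. unfold euler_gamma_int.
  assert (B1 := RInt_harmonic_integrand_head). assert (B2 := RInt_exp_neg_div_tail).
  apply Rabs_le_between in B1.
  assert (B3 : - Rabs (RInt_pinfty 1 exp_neg_div - RInt exp_neg_div 1 N)
                <= RInt_pinfty 1 exp_neg_div - RInt exp_neg_div 1 N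
                <= Rabs (RInt_pinfty 1 exp_neg_div - RInt exp_neg_div 1 N))
    by (apply Rabs_le_between; lra).
  apply Rabs_le. split; lra.
Qed.

End Harmonic.

Lemma euler_gamma_eq : euler_gamma = euler_gamma_int.
Proof.
  unfold euler_gamma.
  replace euler_gamma_int with (real (Finite euler_gamma_int)) by reflexivity. f_equal.
  apply is_lim_seq_unique, is_lim_seq_spec. intros eps.
  assert (He := cond_pos eps).
  destruct is_RInt_pinfty_exp_neg_div as [_ HE].
  destruct (proj1 (is_lim_pinfty_eps _ _) HE (mkposreal (eps / 2) ltac:(lra))) as [M HM].
  simpl in HM.
  destruct (proj2 (is_lim_seq_spec INR p_infty) is_lim_seq_INR (Rmax M (4 / eps))) as [N0 HN0].
  exists N0. intros n Hn. specialize (HN0 n Hn).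
  assert (Hm1 := Rmax_l M (4 / eps)). assert (Hm2 := Rmax_r M (4 / eps)).
  rewrite S_INR in *.
  assert (Hb := harmonic_sub_ln_bound (S n) ltac:(lia)). rewrite S_INR in Hb.
  assert (H4 : 0 < 4 / eps) by (apply Rdiv_lt_0_compat; lra).
  assert (HM' := HM (INR n + 1) ltac:(lra)). rewrite Rabs_minus_sym in HM'.
  assert (H2 : 2 / (INR n + 1) < eps / 2).
  { apply Rmult_lt_reg_r with (INR n + 1); [lra |].
    unfold Rdiv. rewrite Rmult_assoc, Rinv_l by lra.
    assert (Hq : 4 / eps < INR n + 1) by lra.
    apply Rmult_lt_compat_l with (r := eps / 2) in Hq; [| lra].
    replace (eps / 2 * (4 / eps)) with 2 in Hq by (field; lra). lra. }
  lra.
Qed.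

(** * Identification of the Laplace transforms *)

Lemma RInt_kernel_g_0_1 : RInt kernel_g 0 1 = ln 2 / 2.
Proof.
  apply is_RInt_unique.
  replace (ln 2 / 2) with (minus (ln (1 + 1 ^ 2) / 2) (ln (1 + 0 ^ 2) / 2)).
  - apply (is_RInt_derive (fun v => ln (1 + v ^ 2) / 2)); intros x _.
    + unfold kernel_g. assert (H := one_plus_sq_pos x). auto_derive; [lra | field; lra].
    + apply (ex_derive_continuous (K := R_AbsRing) (V := R_NormedModule)), ex_derive_kernel_g.
  - replace (1 + 0 ^ 2) with 1 by ring. replace (1 + 1 ^ 2) with 2 by ring.
    rewrite ln_1. unfold minus, plus, opp; simpl. field.
Qed.

Lemma is_lim_ln_1_plus_inv_sq : is_lim (fun v => - ln (1 + / v ^ 2) / 2) p_infty 0.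
Proof.
  replace (Finite 0) with (Finite (- ln (1 + 0) / 2)) by (f_equal; rewrite Rplus_0_r, ln_1; field).
  apply (is_lim_comp_continuous (fun v => / v ^ 2) (fun y => - ln (1 + y) / 2) p_infty 0).
  - apply is_lim_pinfty_eps. intros eps. exists (/ eps + 1). intros x Hx.
    assert (He := cond_pos eps). assert (Hie : 0 < / eps) by (apply Rinv_0_lt_compat; auto).
    assert (Hx2 : / eps < x ^ 2) by nra.
    rewrite Rminus_0_r, Rabs_right by (left; apply Rinv_0_lt_compat; nra).
    apply Rinv_lt_contravar in Hx2; [| nra]. now rewrite Rinv_inv in Hx2.
  - apply (ex_derive_continuous (K := R_AbsRing) (V := R_NormedModule)). auto_derive. lra.
Qed.

Lemma is_RInt_pinfty_kernel_f_div : is_RInt_pinfty 1 (fun v => kernel_f v / v) (ln 2 / 2).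
Proof.
  replace (ln 2 / 2) with (0 - (ln 1 - ln (1 + 1 ^ 2) / 2))
    by (rewrite ln_1; replace (1 + 1 ^ 2) with 2 by ring; field).
  apply (is_RInt_pinfty_derive 1 _ (fun v => ln v - ln (1 + v ^ 2) / 2)).
  - intros x Hx. unfold kernel_f. assert (H := one_plus_sq_pos x).
    auto_derive; [lra | field; lra].
  - intros x Hx. unfold kernel_f. assert (H := one_plus_sq_pos x).
    apply (ex_derive_continuous (K := R_AbsRing) (V := R_NormedModule)). auto_derive. lra.
  - apply (is_lim_ext_loc (fun v => - ln (1 + / v ^ 2) / 2)); [| apply is_lim_ln_1_plus_inv_sq].
    exists 0. intros v Hv.
    assert (0 < / v ^ 2) by (apply Rinv_0_lt_compat; nra).
    replace (1 + v ^ 2) with (v ^ 2 * (1 + / v ^ 2)) by (field; lra).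
    rewrite ln_mult by nra. replace (v ^ 2) with (v * v) by ring. rewrite ln_mult by lra. field.
Qed.

Lemma RInt_exp_neg_div_eq (a : R) : 0 < a < 1 ->
  RInt exp_neg_div a 1 = - ln a - RInt one_sub_exp_div a 1.
Proof.
  intros Ha.
  assert (Hinv : forall x, a <= x -> continuous (fun t => / t) x).
  { intros x Hx. apply (ex_derive_continuous (K := R_AbsRing) (V := R_NormedModule)).
    auto_derive. lra. }
  replace (- ln a) with (RInt (fun t => / t) a 1).
  - rewrite <- (RInt_minus (fun t => / t) one_sub_exp_div).
    + apply RInt_ext. intros x Hx. rewrite Rmin_left, Rmax_right in Hx by lra.
      unfold exp_neg_div, one_sub_exp_div, minus, plus, opp; simpl.
      destruct (Req_EM_T x 0); [lra | field; lra].
    + apply (ex_RInt_continuous (V := R_CompleteNormedModule)). intros z Hz.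
      rewrite Rmin_left, Rmax_right in Hz by lra. apply Hinv. lra.
    + apply ex_RInt_continuous_R, continuous_one_sub_exp_div.
  - apply is_RInt_unique. replace (- ln a) with (minus (ln 1) (ln a))
      by (unfold minus, plus, opp; simpl; rewrite ln_1; ring).
    apply (is_RInt_derive ln (fun t => / t)); intros x Hx; rewrite Rmin_left in Hx by lra;
      [apply is_derive_ln | apply Hinv]; lra.
Qed.

(* Substituting [t = a v] in [int_a^oo e^(-t) / t dt]. *)
Lemma is_RInt_pinfty_exp_div (a : R) : 0 < a < 1 ->
  is_RInt_pinfty 1 (fun v => exp (- a * v) / v) (RInt exp_neg_div a 1 + RInt_pinfty 1 exp_neg_div).
Proof.
  intros Ha.
  assert (H1 : is_RInt_pinfty a exp_neg_div (RInt exp_neg_div a 1 + RInt_pinfty 1 exp_neg_div)).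
  { apply is_RInt_pinfty_Chasles_l; [lra | | apply is_RInt_pinfty_exp_neg_div].
    apply (ex_RInt_continuous (V := R_CompleteNormedModule)). intros z Hz.
    rewrite Rmin_left, Rmax_right in Hz by lra. apply continuous_exp_neg_div. lra. }
  assert (H2 := is_RInt_pinfty_comp_scal a exp_neg_div a _ ltac:(lra) H1).
  replace (a / a) with 1 in H2 by (field; lra).
  apply is_RInt_pinfty_ext with (fun v => a * exp_neg_div (a * v)); auto.
  intros x Hx. unfold exp_neg_div. replace (- (a * x)) with (- a * x) by ring. field. lra.
Qed.

Definition damped_kernel_f_div (a v : R) : R := exp (- a * v) * kernel_f v / v.

Lemma is_RInt_pinfty_damped_kernel_f_div (a : R) : 0 < a ->
  is_RInt_pinfty 1 (damped_kernel_f_div a) (RInt_pinfty 1 (damped_kernel_f_div a)).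
Proof.
  intros Ha. apply RInt_pinfty_correct.
  apply ex_is_RInt_pinfty_dominated with (fun v => exp (- a * v))
    (/ a - RInt (fun v => exp (- a * v)) 0 1).
  - intros x Hx. apply (ex_derive_continuous (K := R_AbsRing) (V := R_NormedModule)).
    unfold damped_kernel_f_div, kernel_f. assert (H := one_plus_sq_pos x). auto_derive. lra.
  - intros x Hx. unfold damped_kernel_f_div.
    assert (Hw := kernel_f_bound x). assert (He := exp_pos (- a * x)).
    apply Rabs_div_le; [lra |]. rewrite Rabs_mult, !Rabs_right by lra.
    apply Rle_trans with (exp (- a * x) * 1); [apply Rmult_le_compat_l |]; nra.
  - apply is_RInt_pinfty_Chasles_r; [lra |]. apply is_RInt_pinfty_exp; auto.
Qed.

(* Uses [v / (1 + v^2) = 1 / v - 1 / (v (1 + v^2))] on [1, oo). *)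
Lemma aux_g_int_decomposition (a : R) : 0 < a < 1 ->
  aux_g_int a + ln a + euler_gamma_int =
    (RInt (damped kernel_g a) 0 1 - RInt kernel_g 0 1)
    - (RInt_pinfty 1 (damped_kernel_f_div a) - ln 2 / 2) + RInt one_sub_exp_div 0 a.
Proof.
  intros Ha.
  assert (S1 : is_RInt_pinfty 1 (damped kernel_g a) (aux_g_int a - RInt (damped kernel_g a) 0 1))
    by (apply is_RInt_pinfty_Chasles_r; [lra | apply is_RInt_pinfty_aux_g_int; lra]).
  assert (S2 : is_RInt_pinfty 1 (damped kernel_g a)
                 (RInt exp_neg_div a 1 + RInt_pinfty 1 exp_neg_div
                  - RInt_pinfty 1 (damped_kernel_f_div a))).
  { apply is_RInt_pinfty_ext with (fun v => exp (- a * v) / v - damped_kernel_f_div a v).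
    - intros x Hx. unfold damped_kernel_f_div, damped, kernel_g, kernel_f.
      assert (Hp := one_plus_sq_pos x). field. lra.
    - apply is_RInt_pinfty_minus; auto using is_RInt_pinfty_exp_div.
      apply is_RInt_pinfty_damped_kernel_f_div; lra. }
  assert (S3 := is_RInt_pinfty_unique _ _ _ _ S1 S2).
  rewrite RInt_exp_neg_div_eq in S3 by auto.
  rewrite RInt_kernel_g_0_1. unfold euler_gamma_int.
  rewrite <- (RInt_Chasles one_sub_exp_div 0 a 1) by (apply ex_RInt_continuous_R, continuous_one_sub_exp_div).
  unfold plus; simpl. lra.
Qed.

Lemma one_sub_exp_neg_le (a v : R) : 0 <= a -> 0 <= v -> 0 <= 1 - exp (- a * v) <= a * v.
Proof.
  intros Ha Hv. assert (H := exp_ineq1_le (- a * v)).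
  assert (exp (- a * v) <= 1) by (rewrite <- exp_0; apply exp_le; nra). lra.
Qed.

Lemma aux_g_int_at_0 : vanishes_at_0 (fun a => aux_g_int a + ln a + euler_gamma_int).
Proof.
  set (c3 := PI / 2 - RInt kernel_f 0 1).
  apply (vanishes_at_0_lin _ (2 + Rabs c3)). intros a Ha.
  rewrite aux_g_int_decomposition by auto.
  assert (Hexg : forall u v, ex_RInt kernel_g u v)
    by (intros; apply ex_RInt_continuous_R; intros x;
        apply (ex_derive_continuous (K := R_AbsRing) (V := R_NormedModule)), ex_derive_kernel_g).
  assert (Hexd : forall u v, ex_RInt (damped kernel_g a) u v)
    by (intros; apply ex_RInt_continuous_R; intros; apply continuous_damped, ex_derive_kernel_g).
  assert (B1 : Rabs (RInt (damped kernel_g a) 0 1 - RInt kernel_g 0 1) <= 1 * a).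
  { rewrite <- (RInt_minus (damped kernel_g a) kernel_g) by auto.
    replace (1 * a) with ((1 - 0) * a) by ring.
    apply (norm_RInt_le_const (V := R_NormedModule) (fun t => minus (damped kernel_g a t) (kernel_g t)) 0 1);
      [lra | |].
    - intros t Ht. unfold norm, minus, plus, opp, damped; simpl; unfold abs; simpl.
      assert (Hw := kernel_g_bound t ltac:(lra)). assert (He := one_sub_exp_neg_le a t ltac:(lra) ltac:(lra)).
      replace (kernel_g t * exp (- a * t) + - kernel_g t) with (- (kernel_g t * (1 - exp (- a * t)))) by ring.
      rewrite Rabs_Ropp, Rabs_right by nra. nra.
    - apply (RInt_correct (V := R_CompleteNormedModule)), (ex_RInt_minus (V := R_NormedModule)); auto. }
  assert (B2 : Rabs (RInt_pinfty 1 (damped_kernel_f_div a) - ln 2 / 2) <= a * c3).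
  { apply (is_RInt_pinfty_dist_le 1 (damped_kernel_f_div a) (fun v => kernel_f v / v)
             (fun v => a * kernel_f v)).
    - apply is_RInt_pinfty_damped_kernel_f_div. lra.
    - apply is_RInt_pinfty_kernel_f_div.
    - apply is_RInt_pinfty_scal, is_RInt_pinfty_Chasles_r, is_RInt_pinfty_kernel_f. lra.
    - intros v Hv. unfold damped_kernel_f_div.
      assert (Hw := kernel_f_bound v). assert (He := one_sub_exp_neg_le a v ltac:(lra) ltac:(lra)).
      replace (exp (- a * v) * kernel_f v / v - kernel_f v / v)
        with (- (kernel_f v * (1 - exp (- a * v)) / v)) by (field; lra).
      rewrite Rabs_Ropp. apply Rabs_div_le; [lra |].
      rewrite Rabs_right, (Rabs_right v) by nra. nra. }
  assert (B3 : Rabs (RInt one_sub_exp_div 0 a) <= a * 1).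
  { apply Rabs_RInt_le_const; [lra | apply continuous_one_sub_exp_div |].
    intros t Ht. assert (H := one_sub_exp_div_bound t ltac:(lra)). rewrite Rabs_right; lra. }
  assert (0 <= Rabs c3) by apply Rabs_pos. assert (c3 <= Rabs c3) by apply RRle_abs.
  apply Rabs_le_between in B1, B2, B3. apply Rabs_le. split; nra.
Qed.

(* [(aux_f_int - aux_f, aux_g_int - aux_g)] solves the rotation system and vanishes at [0+]. *)
Lemma aux_int_eq (a : R) : 0 < a -> aux_f_int a = aux_f a /\ aux_g_int a = aux_g a.
Proof.
  intros Ha.
  destruct (rotation_system_zero (fun t => aux_f_int t - aux_f t)
              (fun t => aux_g_int t - aux_g t)) with a as [H1 H2]; auto; try lra.
  - intros t Ht. replace (- (aux_g_int t - aux_g t)) with (- aux_g_int t - - aux_g t) by ring.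
    apply (is_derive_minus aux_f_int aux_f); auto using is_derive_aux_f_int, is_derive_aux_f.
  - intros t Ht. replace (aux_f_int t - aux_f t) with ((aux_f_int t - / t) - (aux_f t - / t)) by ring.
    apply (is_derive_minus aux_g_int aux_g); auto using is_derive_aux_g_int, is_derive_aux_g.
  - apply (vanishes_at_0_ext _ (fun t => (aux_f_int t - PI / 2) + -1 * (aux_f t - PI / 2))).
    + intros t _. ring.
    + apply vanishes_at_0_plus, vanishes_at_0_scal; auto using aux_f_int_at_0, aux_f_at_0.
  - apply (vanishes_at_0_ext _ (fun t => (aux_g_int t + ln t + euler_gamma_int)
                                        + -1 * (aux_g t + ln t + euler_gamma))).
    + intros t _. rewrite euler_gamma_eq. ring.
    + apply vanishes_at_0_plus, vanishes_at_0_scal; auto using aux_g_int_at_0, aux_g_at_0.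
Qed.

(** * The Laplace and Cauchy densities *)

Definition cauchy_d1 (s t : R) : R := - (2 * t * s) / (PI * (s ^ 2 + t ^ 2) ^ 2).
Definition cauchy_d2 (s t : R) : R := s * (6 * t ^ 2 - 2 * s ^ 2) / (PI * (s ^ 2 + t ^ 2) ^ 3).

Section Densities.

Variable s : R.
Hypothesis Hs : 0 < s.

Let sq_pos (t : R) : 0 < s ^ 2 + t ^ 2.
Proof. assert (0 <= t ^ 2) by apply pow2_ge_0. assert (0 < s ^ 2) by (apply pow_lt; auto). lra. Qed.

Let PI_pos : 0 < PI.
Proof. apply PI_RGT_0. Qed.

Lemma cauchy_pdf_0_eq (t : R) : cauchy_pdf 0 s t = s / (PI * (s ^ 2 + t ^ 2)).
Proof.
  unfold cauchy_pdf. assert (H := sq_pos t).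
  replace (1 + ((t - 0) / s) ^ 2) with ((s ^ 2 + t ^ 2) / s ^ 2) by (field; lra).
  field. repeat split; lra.
Qed.

Lemma is_derive_cauchy_pdf_0 (t : R) : is_derive (cauchy_pdf 0 s) t (cauchy_d1 s t).
Proof.
  apply (is_derive_ext (fun t => s / (PI * (s ^ 2 + t ^ 2)))); [intros; symmetry; apply cauchy_pdf_0_eq |].
  unfold cauchy_d1. assert (H := sq_pos t).
  auto_derive; [apply Rgt_not_eq, Rmult_lt_0_compat; lra | field; split; lra].
Qed.

Lemma is_derive_cauchy_d1 (t : R) : is_derive (cauchy_d1 s) t (cauchy_d2 s t).
Proof.
  unfold cauchy_d1, cauchy_d2. assert (H := sq_pos t).
  auto_derive; [apply Rgt_not_eq, Rmult_lt_0_compat; [lra | nra] | field; split; nra].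
Qed.

Lemma continuous_cauchy_pdf_0 (t : R) : continuous (cauchy_pdf 0 s) t.
Proof.
  apply (ex_derive_continuous (K := R_AbsRing) (V := R_NormedModule)).
  eexists; apply is_derive_cauchy_pdf_0.
Qed.

Lemma continuous_cauchy_d1 (t : R) : continuous (cauchy_d1 s) t.
Proof.
  apply (ex_derive_continuous (K := R_AbsRing) (V := R_NormedModule)).
  eexists; apply is_derive_cauchy_d1.
Qed.

Lemma cauchy_pdf_0_bound (t : R) : 0 < cauchy_pdf 0 s t <= / (PI * s).
Proof.
  rewrite cauchy_pdf_0_eq. assert (H := sq_pos t). assert (0 <= t ^ 2) by apply pow2_ge_0.
  split; [apply Rdiv_lt_0_compat; auto; apply Rmult_lt_0_compat; lra |].
  replace (/ (PI * s)) with (s / (PI * s ^ 2)) by (field; lra).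
  apply Rmult_le_compat_l; [lra |]. apply Rinv_le_contravar; [apply Rmult_lt_0_compat; nra |].
  apply Rmult_le_compat_l; lra.
Qed.

Lemma Rabs_cauchy_d1_le (t : R) : Rabs (cauchy_d1 s t) <= / (PI * s ^ 2).
Proof.
  unfold cauchy_d1. assert (H := sq_pos t). assert (Hs2 : 0 < s ^ 2) by (apply pow_lt; auto).
  assert (0 <= t ^ 2) by apply pow2_ge_0.
  apply Rabs_div_le; [apply Rgt_not_eq, Rmult_lt_0_compat; [lra | nra] |].
  rewrite Rabs_Ropp, (Rabs_right (PI * _)) by (left; apply Rmult_lt_0_compat; [lra | nra]).
  rewrite !Rabs_mult, (Rabs_right 2), (Rabs_right s) by lra.
  replace (/ (PI * s ^ 2) * (PI * (s ^ 2 + t ^ 2) ^ 2)) with ((s ^ 2 + t ^ 2) ^ 2 / s ^ 2)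
    by (field; lra).
  apply Rle_trans with (s ^ 2 + t ^ 2).
  - rewrite (Rabs_sq t). assert (0 <= (Rabs t - s) ^ 2) by apply pow2_ge_0. nra.
  - apply Rmult_le_reg_r with (s ^ 2); auto.
    replace ((s ^ 2 + t ^ 2) ^ 2 / s ^ 2 * s ^ 2) with ((s ^ 2 + t ^ 2) * (s ^ 2 + t ^ 2))
      by (field; lra).
    apply Rmult_le_compat_l; lra.
Qed.

Lemma Rabs_cauchy_d2_le (t : R) : Rabs (cauchy_d2 s t) <= 6 / (PI * s ^ 3).
Proof.
  unfold cauchy_d2. assert (H := sq_pos t). assert (Hs2 : 0 < s ^ 2) by (apply pow_lt; auto).
  assert (Hs3 : 0 < s ^ 3) by (apply pow_lt; auto). assert (0 <= t ^ 2) by apply pow2_ge_0.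
  apply Rabs_div_le; [apply Rgt_not_eq, Rmult_lt_0_compat; [lra | apply pow_lt; lra] |].
  rewrite (Rabs_right (PI * _)) by (left; apply Rmult_lt_0_compat; [lra | apply pow_lt; lra]).
  rewrite Rabs_mult, (Rabs_right s) by lra.
  assert (H1 : Rabs (6 * t ^ 2 - 2 * s ^ 2) <= 6 * (s ^ 2 + t ^ 2)) by (apply Rabs_le; split; lra).
  replace (6 / (PI * s ^ 3) * (PI * (s ^ 2 + t ^ 2) ^ 3))
    with (s * (6 * (s ^ 2 + t ^ 2)) * ((s ^ 2 + t ^ 2) / s ^ 2) ^ 2) by (field; lra).
  rewrite <- (Rmult_1_r (s * Rabs _)).
  apply Rmult_le_compat; [apply Rmult_le_pos; [lra | apply Rabs_pos] | lra | apply Rmult_le_compat_l; lra |].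
  rewrite <- (pow1 2). apply pow_incr. split; [lra |].
  apply Rmult_le_reg_r with (s ^ 2); auto. unfold Rdiv. rewrite Rmult_assoc, Rinv_l; lra.
Qed.

Lemma laplace_pdf_0_pos (u : R) : 0 < laplace_pdf 0 s u.
Proof. unfold laplace_pdf. apply Rmult_lt_0_compat; [apply Rinv_0_lt_compat; lra | apply exp_pos]. Qed.

Lemma laplace_pdf_0_eq (u : R) : 0 <= u -> laplace_pdf 0 s u = / (2 * s) * exp (- (/ s) * u).
Proof.
  intros Hu. unfold laplace_pdf. rewrite Rminus_0_r, Rabs_right by lra.
  f_equal. f_equal. field. lra.
Qed.

Lemma continuous_laplace_pdf (mu x : R) : continuous (laplace_pdf mu s) x.
Proof.
  unfold laplace_pdf.
  apply (continuous_comp (fun t => Rabs (t - mu)) (fun r => / (2 * s) * exp (- r / s))).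
  - apply (continuous_comp (fun t => t - mu) Rabs); [| apply continuous_Rabs].
    apply (ex_derive_continuous (K := R_AbsRing) (V := R_NormedModule)). auto_derive; auto.
  - apply (ex_derive_continuous (K := R_AbsRing) (V := R_NormedModule)). auto_derive. lra.
Qed.

Lemma laplace_pdf_shift (mu u : R) : laplace_pdf mu s (mu + u) = laplace_pdf 0 s u.
Proof. unfold laplace_pdf. now replace (mu + u - mu) with (u - 0) by ring. Qed.

Lemma laplace_pdf_reflect (mu u : R) : laplace_pdf mu s (mu - u) = laplace_pdf 0 s u.
Proof.
  unfold laplace_pdf. replace (mu - u - mu) with (- (u - 0)) by ring. now rewrite Rabs_Ropp.
Qed.

Lemma is_RInt_pinfty_laplace_pdf : is_RInt_pinfty 0 (laplace_pdf 0 s) (/ 2).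
Proof.
  apply is_RInt_pinfty_ext with (fun u => / (2 * s) * exp (- (/ s) * u));
    [intros; symmetry; apply laplace_pdf_0_eq; auto |].
  replace (/ 2) with (/ (2 * s) * / / s) by (field; lra).
  apply is_RInt_pinfty_scal, is_RInt_pinfty_exp, Rinv_0_lt_compat; auto.
Qed.

Lemma is_RInt_pinfty_x_laplace_pdf : is_RInt_pinfty 0 (fun u => u * laplace_pdf 0 s u) (s / 2).
Proof.
  apply is_RInt_pinfty_ext with (fun u => / (2 * s) * (u * exp (- (/ s) * u)));
    [intros; rewrite laplace_pdf_0_eq; auto; ring |].
  replace (s / 2) with (/ (2 * s) * / (/ s) ^ 2) by (field; lra).
  apply is_RInt_pinfty_scal, is_RInt_pinfty_xexp, Rinv_0_lt_compat; auto.
Qed.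

End Densities.

(** * The posterior mean *)

Lemma is_derive_iff_diff_quot (f : R -> R) (x l : R) :
  is_derive f x l <-> is_lim (fun h => (f (x + h) - f x) / h) 0 l.
Proof.
  assert (Hball : forall d y, ball 0 d y <-> Rabs y < d).
  { intros d y. unfold ball; simpl; unfold AbsRing_ball, abs, minus, plus, opp; simpl.
    rewrite Ropp_0, Rplus_0_r. tauto. }
  rewrite is_derive_Reals, <- is_lim_spec. simpl. split.
  - intros H eps. destruct (H eps (cond_pos eps)) as [d Hd].
    exists d. intros y Hy Hy0. apply Hd; auto. now apply Hball.
  - intros H eps Heps. destruct (H (mkposreal _ Heps)) as [d Hd].
    exists d. intros h Hh0 Hh. apply (Hd h); auto. now apply Hball.
Qed.

Lemma is_derive_div_root (f g : R -> R) (x l : R) :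
  f x = 0 -> is_derive f x l -> continuous g x -> g x <> 0 ->
  is_derive (fun y => f y / g y) x (l / g x).
Proof.
  intros Hf Hd Hg Hg0. apply is_derive_iff_diff_quot.
  apply is_lim_ext with (fun h => (f (x + h) - f x) / h / g (x + h)).
  { intros h. rewrite Hf. unfold Rdiv. ring. }
  assert (Lg : is_lim (fun h => g (x + h)) 0 (g x)).
  { apply (is_lim_comp_continuous (fun h => x + h) g 0 x); [| exact Hg].
    replace (Finite x) with (Finite (x + 0)) by (f_equal; ring).
    apply (is_lim_plus' (fun _ => x) (fun h => h)); [apply is_lim_const | apply is_lim_id]. }
  assert (H := is_lim_div _ _ 0 l (g x) (proj1 (is_derive_iff_diff_quot f x l) Hd) Lg
                 ltac:(intros E; injection E; auto)).
  apply H. simpl. auto.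
Qed.

Lemma is_derive_comp_shift (f f' : R -> R) (c z : R) :
  (forall t, is_derive f t (f' t)) -> is_derive (fun z => f (z + c)) z (f' (z + c)).
Proof.
  intros Hf. replace (f' (z + c)) with (scal 1 (f' (z + c)))
    by (unfold scal; simpl; unfold mult; simpl; ring).
  apply (is_derive_comp f (fun z => z + c)); [apply Hf | auto_derive; auto].
Qed.

Lemma continuous_comp_lin (f : R -> R) (c k x : R) :
  (forall t, continuous f t) -> continuous (fun u => f (c + k * u)) x.
Proof.
  intros Hf. apply (continuous_comp (fun u => c + k * u) f); [| apply Hf].
  apply (ex_derive_continuous (K := R_AbsRing) (V := R_NormedModule)). auto_derive; auto.
Qed.

Lemma continuous_at_lipschitz (f : R -> R) (x K : R) :
  (forall y, Rabs (f y - f x) <= K * Rabs (y - x)) -> continuous f x.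
Proof.
  intros H. apply continuity_pt_filterlim. intros eps Heps.
  assert (HK : 0 < Rabs K + 1) by (assert (0 <= Rabs K) by apply Rabs_pos; lra).
  exists (eps / (Rabs K + 1)). split; [apply Rdiv_lt_0_compat; lra |].
  intros y [_ Hy]. simpl in Hy. unfold R_dist in Hy. simpl. unfold R_dist.
  eapply Rle_lt_trans; [apply H |].
  assert (K <= Rabs K) by apply RRle_abs. assert (0 <= Rabs (y - x)) by apply Rabs_pos.
  apply Rle_lt_trans with ((Rabs K + 1) * Rabs (y - x)); [nra |].
  apply Rmult_lt_compat_l with (r := Rabs K + 1) in Hy; [| lra].
  replace ((Rabs K + 1) * (eps / (Rabs K + 1))) with eps in Hy by (field; lra). lra.
Qed.

Section Posterior.

Variables s0 se : R.
Hypotheses (Hs0 : 0 < s0) (Hse : 0 < se).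

Local Notation phi := (laplace_pdf 0 s0).
Local Notation lam := (cauchy_pdf 0 se).

(* Folding the two half-lines [theta0 +- u] of the posterior integrals onto [0, oo). *)
Definition post_den_integrand (y u : R) : R := phi u * (lam (y - u) + lam (y + u)).
Definition post_num_integrand (y u : R) : R := u * phi u * (lam (y - u) - lam (y + u)).
Definition post_dnum_integrand (u : R) : R := u * phi u * (cauchy_d1 se (- u) - cauchy_d1 se u).

Definition post_den (y : R) : R := RInt_pinfty 0 (post_den_integrand y).
Definition post_num (y : R) : R := RInt_pinfty 0 (post_num_integrand y).

Let C1 := / (PI * se ^ 2).
Let C2 := 6 / (PI * se ^ 3).

Lemma cauchy_shift_lipschitz (c z : R) : Rabs (lam (z + c) - lam c) <= C1 * Rabs z.
Proof.
  replace (lam c) with (lam (0 + c)) by (f_equal; ring).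
  replace (Rabs z) with (Rabs (z - 0)) by (f_equal; ring).
  apply (mvt_bound (fun z => lam (z + c)) (fun z => cauchy_d1 se (z + c))); intros t _.
  - apply is_derive_comp_shift. intros; apply is_derive_cauchy_pdf_0; auto.
  - apply Rabs_cauchy_d1_le; auto.
Qed.

Lemma cauchy_shift_taylor (c z : R) :
  Rabs (lam (z + c) - lam c - z * cauchy_d1 se c) <= C2 * z ^ 2.
Proof.
  replace (lam c) with (lam (0 + c)) by (f_equal; ring).
  replace (cauchy_d1 se c) with (cauchy_d1 se (0 + c)) by (f_equal; ring).
  replace z with (z - 0) at 2 3 by ring.
  apply (taylor2_bound (fun z => lam (z + c)) (fun z => cauchy_d1 se (z + c))
                       (fun z => cauchy_d2 se (z + c))); intros t _.
  - apply is_derive_comp_shift. intros; apply is_derive_cauchy_pdf_0; auto.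
  - apply is_derive_comp_shift. intros; apply is_derive_cauchy_d1; auto.
  - apply Rabs_cauchy_d2_le; auto.
Qed.

Lemma continuous_lam_comp (c k x : R) : continuous (fun u => lam (c + k * u)) x.
Proof. apply continuous_comp_lin. intros; apply continuous_cauchy_pdf_0; auto. Qed.

Lemma continuous_post_den_integrand (y x : R) : continuous (post_den_integrand y) x.
Proof.
  unfold post_den_integrand.
  apply (continuous_mult phi); [apply continuous_laplace_pdf; auto |].
  apply (continuous_plus (fun u => lam (y - u)) (fun u => lam (y + u))).
  - eapply continuous_ext; [| apply (continuous_lam_comp y (-1))]. intros; simpl; f_equal; ring.
  - eapply continuous_ext; [| apply (continuous_lam_comp y 1)]. intros; simpl; f_equal; ring.
Qed.

Lemma continuous_post_num_integrand (y x : R) : continuous (post_num_integrand y) x.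
Proof.
  unfold post_num_integrand.
  apply (continuous_mult (fun u => u * phi u)).
  - apply (continuous_mult (fun u => u) phi); [apply continuous_id | apply continuous_laplace_pdf; auto].
  - apply (continuous_minus (fun u => lam (y - u)) (fun u => lam (y + u))).
    + eapply continuous_ext; [| apply (continuous_lam_comp y (-1))]. intros; simpl; f_equal; ring.
    + eapply continuous_ext; [| apply (continuous_lam_comp y 1)]. intros; simpl; f_equal; ring.
Qed.

Lemma phi_nonneg (u : R) : 0 <= phi u.
Proof. left; apply laplace_pdf_0_pos; auto. Qed.

Lemma Rabs_lam_sum_le (y u : R) :
  Rabs (lam (y - u) + lam (y + u)) <= 2 / (PI * se) /\
  Rabs (lam (y - u) - lam (y + u)) <= 2 / (PI * se).
Proof.
  destruct (cauchy_pdf_0_bound se Hse (y - u)) as [H1 H2].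
  destruct (cauchy_pdf_0_bound se Hse (y + u)) as [H3 H4].
  split; apply Rabs_le; unfold Rdiv; split; lra.
Qed.

Lemma is_RInt_pinfty_post_den (y : R) : is_RInt_pinfty 0 (post_den_integrand y) (post_den y).
Proof.
  apply RInt_pinfty_correct.
  apply (ex_is_RInt_pinfty_dominated 0 _ (fun u => 2 / (PI * se) * phi u) (2 / (PI * se) * / 2)).
  - intros; apply continuous_post_den_integrand.
  - intros u Hu. unfold post_den_integrand. rewrite Rmult_comm.
    apply Rabs_mult_le; [apply Rabs_lam_sum_le | rewrite Rabs_right; [lra | apply Rle_ge, phi_nonneg]].
  - apply is_RInt_pinfty_scal, is_RInt_pinfty_laplace_pdf; auto.
Qed.

Lemma is_RInt_pinfty_post_num (y : R) : is_RInt_pinfty 0 (post_num_integrand y) (post_num y).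
Proof.
  apply RInt_pinfty_correct.
  apply (ex_is_RInt_pinfty_dominated 0 _ (fun u => 2 / (PI * se) * (u * phi u))
           (2 / (PI * se) * (s0 / 2))).
  - intros; apply continuous_post_num_integrand.
  - intros u Hu. unfold post_num_integrand. rewrite Rmult_comm.
    apply Rabs_mult_le; [apply Rabs_lam_sum_le |].
    rewrite Rabs_right; [lra | apply Rle_ge, Rmult_le_pos; [lra | apply phi_nonneg]].
  - apply is_RInt_pinfty_scal, is_RInt_pinfty_x_laplace_pdf; auto.
Qed.

Lemma post_num_0 : post_num 0 = 0.
Proof.
  apply (RInt_pinfty_eq 0 (post_num_integrand 0)).
  apply is_RInt_pinfty_ext with (fun _ => 0); [| apply is_RInt_pinfty_const_0].
  intros u _. unfold post_num_integrand.
  rewrite !cauchy_pdf_0_eq by auto. replace ((0 - u) ^ 2) with ((0 + u) ^ 2) by ring. ring.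
Qed.

Lemma post_den_pos (y : R) : 0 < post_den y.
Proof.
  apply (is_RInt_pinfty_gt_0 0 (post_den_integrand y) 1); [lra | | | | apply is_RInt_pinfty_post_den].
  - intros x _. left. unfold post_den_integrand.
    destruct (cauchy_pdf_0_bound se Hse (y - x)), (cauchy_pdf_0_bound se Hse (y + x)).
    apply Rmult_lt_0_compat; [apply laplace_pdf_0_pos; auto | lra].
  - intros x _. unfold post_den_integrand.
    destruct (cauchy_pdf_0_bound se Hse (y - x)), (cauchy_pdf_0_bound se Hse (y + x)).
    apply Rmult_lt_0_compat; [apply laplace_pdf_0_pos; auto | lra].
  - intros; apply continuous_post_den_integrand.
Qed.

Lemma continuous_post_den_0 : continuous post_den 0.
Proof.
  apply (continuous_at_lipschitz post_den 0 (2 * C1 * / 2)). intros y.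
  rewrite Rminus_0_r. replace (2 * C1 * / 2 * Rabs y) with (Rabs y * (2 * C1) * / 2) by ring.
  apply (is_RInt_pinfty_dist_le 0 (post_den_integrand y) (post_den_integrand 0)
           (fun u => Rabs y * (2 * C1) * phi u));
    auto using is_RInt_pinfty_post_den.
  - apply is_RInt_pinfty_scal, is_RInt_pinfty_laplace_pdf; auto.
  - intros u Hu. unfold post_den_integrand.
    replace (phi u * (lam (y - u) + lam (y + u)) - phi u * (lam (0 - u) + lam (0 + u)))
      with (phi u * ((lam (y + - u) - lam (- u)) + (lam (y + u) - lam u)))
      by (replace (y - u) with (y + - u) by ring; replace (0 - u) with (- u) by ring;
          replace (0 + u) with u by ring; ring).
    rewrite Rabs_mult, (Rabs_right (phi u)) by (apply Rle_ge, phi_nonneg).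
    assert (H1 := cauchy_shift_lipschitz (- u) y). assert (H2 := cauchy_shift_lipschitz u y).
    assert (H3 := Rabs_triang (lam (y + - u) - lam (- u)) (lam (y + u) - lam u)).
    replace (Rabs y * (2 * C1) * phi u) with (phi u * (C1 * Rabs y + C1 * Rabs y)) by ring.
    apply Rmult_le_compat_l; [apply phi_nonneg | lra].
Qed.


Lemma is_RInt_pinfty_post_dnum :
  is_RInt_pinfty 0 post_dnum_integrand (RInt_pinfty 0 post_dnum_integrand).
Proof.
  apply RInt_pinfty_correct.
  apply (ex_is_RInt_pinfty_dominated 0 _ (fun u => 2 * C1 * (u * phi u)) (2 * C1 * (s0 / 2))).
  - intros x _. unfold post_dnum_integrand.
    apply (continuous_mult (fun u => u * phi u)).
    + apply (continuous_mult (fun u => u) phi); [apply continuous_id | apply continuous_laplace_pdf; auto].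
    + apply (continuous_minus (fun u => cauchy_d1 se (- u)) (cauchy_d1 se));
        [| apply continuous_cauchy_d1; auto].
      eapply continuous_ext; [| apply (continuous_comp_lin (cauchy_d1 se) 0 (-1))].
      * intros; simpl; f_equal; ring.
      * intros; apply continuous_cauchy_d1; auto.
  - intros u Hu. unfold post_dnum_integrand. rewrite Rmult_comm.
    apply Rabs_mult_le.
    + unfold Rminus. eapply Rle_trans; [apply Rabs_triang |]. rewrite Rabs_Ropp.
      assert (H1 := Rabs_cauchy_d1_le se Hse (- u)). assert (H2 := Rabs_cauchy_d1_le se Hse u).
      fold C1 in H1, H2. lra.
    + rewrite Rabs_right; [lra | apply Rle_ge, Rmult_le_pos; [lra | apply phi_nonneg]].
  - apply is_RInt_pinfty_scal, is_RInt_pinfty_x_laplace_pdf; auto.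
Qed.

Lemma is_derive_post_num : is_derive post_num 0 (RInt_pinfty 0 post_dnum_integrand).
Proof.
  apply (is_derive_RInt_pinfty_param 0 0 1 _ (2 * C2 * (s0 / 2)) post_num_integrand post_num
           post_dnum_integrand (fun u => 2 * C2 * (u * phi u)));
    auto using is_RInt_pinfty_post_num, is_RInt_pinfty_post_dnum; [lra | |].
  - apply is_RInt_pinfty_scal, is_RInt_pinfty_x_laplace_pdf; auto.
  - intros x u _ Hu. unfold post_num_integrand, post_dnum_integrand. rewrite Rminus_0_r.
    assert (H1 := cauchy_shift_taylor (- u) x). assert (H2 := cauchy_shift_taylor u x).
    replace (x - u) with (x + - u) by ring. replace (0 - u) with (- u) by ring.
    replace (0 + u) with u by ring.
    replace (u * phi u * (lam (x + - u) - lam (x + u)) - u * phi u * (lam (- u) - lam u)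
             - x * (u * phi u * (cauchy_d1 se (- u) - cauchy_d1 se u)))
      with (u * phi u * ((lam (x + - u) - lam (- u) - x * cauchy_d1 se (- u))
                         - (lam (x + u) - lam u - x * cauchy_d1 se u))) by ring.
    assert (Hup : 0 <= u * phi u) by (apply Rmult_le_pos; [lra | apply phi_nonneg]).
    rewrite Rabs_mult, (Rabs_right (u * phi u)) by lra.
    replace (x ^ 2 * (2 * C2 * (u * phi u))) with (u * phi u * (C2 * x ^ 2 + C2 * x ^ 2)) by ring.
    apply Rmult_le_compat_l; auto.
    unfold Rminus at 1. eapply Rle_trans; [apply Rabs_triang |]. rewrite Rabs_Ropp. lra.
Qed.

Lemma post_den_0_eq : post_den 0 = / (PI * s0) * aux_f_int (se / s0).
Proof.
  assert (Hp := PI_RGT_0).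
  assert (H := is_RInt_pinfty_comp_scal 0 _ se _ Hse (is_RInt_pinfty_post_den 0)).
  replace (0 / se) with 0 in H by (field; lra).
  apply (is_RInt_pinfty_unique 0 _ _ _ H).
  apply is_RInt_pinfty_ext with (fun v => / (PI * s0) * damped kernel_f (se / s0) v).
  - intros v Hv. unfold post_den_integrand, damped, kernel_f.
    rewrite laplace_pdf_0_eq, !cauchy_pdf_0_eq by (try apply Rmult_le_pos; lra).
    assert (Hv2 := one_plus_sq_pos v).
    replace (se ^ 2 + (0 - se * v) ^ 2) with (se ^ 2 * (1 + v ^ 2)) by ring.
    replace (se ^ 2 + (0 + se * v) ^ 2) with (se ^ 2 * (1 + v ^ 2)) by ring.
    replace (- / s0 * (se * v)) with (- (se / s0) * v) by (field; lra).
    field. repeat split; lra.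
  - apply is_RInt_pinfty_scal, is_RInt_pinfty_aux_f_int, Rdiv_lt_0_compat; auto.
Qed.

Lemma RInt_pinfty_post_dnum_eq : RInt_pinfty 0 post_dnum_integrand =
  / (PI * s0) * (aux_f_int (se / s0) - se / s0 * aux_g_int (se / s0)).
Proof.
  assert (Hp := PI_RGT_0).
  assert (H := is_RInt_pinfty_comp_scal 0 _ se _ Hse is_RInt_pinfty_post_dnum).
  replace (0 / se) with 0 in H by (field; lra).
  apply (is_RInt_pinfty_unique 0 _ _ _ H).
  apply is_RInt_pinfty_ext with (fun v => / (PI * s0) * damped kernel_k (se / s0) v).
  - intros v Hv. unfold post_dnum_integrand, damped, kernel_k, cauchy_d1.
    rewrite laplace_pdf_0_eq by (try apply Rmult_le_pos; lra).
    assert (Hv2 := one_plus_sq_pos v).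
    replace (se ^ 2 + (- (se * v)) ^ 2) with (se ^ 2 * (1 + v ^ 2)) by ring.
    replace (se ^ 2 + (se * v) ^ 2) with (se ^ 2 * (1 + v ^ 2)) by ring.
    replace (- / s0 * (se * v)) with (- (se / s0) * v) by (field; lra).
    field. repeat split; lra.
  - apply is_RInt_pinfty_scal, is_RInt_pinfty_damped_kernel_k, Rdiv_lt_0_compat; auto.
Qed.

End Posterior.

Section PosteriorMean.

Variables s0 se theta0 x : R.
Hypotheses (Hs0 : 0 < s0) (Hse : 0 < se).

Lemma laplace_cauchy_shift (u : R) :
  laplace_pdf theta0 s0 (theta0 + u) * cauchy_pdf 0 se (x - (theta0 + u))
  = laplace_pdf 0 s0 u * cauchy_pdf 0 se (x - theta0 - u).
Proof. rewrite laplace_pdf_shift by auto. do 2 f_equal. ring. Qed.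

Lemma laplace_cauchy_reflect (u : R) :
  laplace_pdf theta0 s0 (theta0 - u) * cauchy_pdf 0 se (x - (theta0 - u))
  = laplace_pdf 0 s0 u * cauchy_pdf 0 se (x - theta0 + u).
Proof. rewrite laplace_pdf_reflect by auto. do 2 f_equal. ring. Qed.

Lemma Rabs_laplace_cauchy_le (u t : R) :
  Rabs (laplace_pdf 0 s0 u * cauchy_pdf 0 se t) <= / (PI * se) * laplace_pdf 0 s0 u.
Proof.
  assert (Hphi : 0 < laplace_pdf 0 s0 u) by (apply laplace_pdf_0_pos; auto).
  destruct (cauchy_pdf_0_bound se Hse t).
  rewrite Rabs_right by (apply Rle_ge, Rmult_le_pos; lra).
  rewrite Rmult_comm. apply Rmult_le_compat_r; lra.
Qed.

Lemma continuous_laplace_cauchy (t : R) :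
  continuous (fun th => laplace_pdf theta0 s0 th * cauchy_pdf 0 se (x - th)) t.
Proof.
  apply (continuous_mult (laplace_pdf theta0 s0) (fun th => cauchy_pdf 0 se (x - th))).
  - apply continuous_laplace_pdf; auto.
  - eapply continuous_ext; [| apply (continuous_comp_lin (cauchy_pdf 0 se) x (-1))].
    + intros; simpl; f_equal; ring.
    + intros; apply continuous_cauchy_pdf_0; auto.
Qed.

Lemma int_R_posterior_den :
  int_R (fun th => laplace_pdf theta0 s0 th * cauchy_pdf 0 se (x - th)) = post_den s0 se (x - theta0).
Proof.
  apply (int_R_dominated _ (fun u => / (PI * se) * laplace_pdf 0 s0 u) theta0 (/ (PI * se) * / 2));
    auto using continuous_laplace_cauchy.
  - apply is_RInt_pinfty_scal, is_RInt_pinfty_laplace_pdf; auto.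
  - intros u _. rewrite laplace_cauchy_shift, laplace_cauchy_reflect.
    split; apply Rabs_laplace_cauchy_le.
  - apply (is_RInt_pinfty_ext 0 (post_den_integrand s0 se (x - theta0)));
      [| apply is_RInt_pinfty_post_den; auto].
    intros u _. rewrite laplace_cauchy_shift, laplace_cauchy_reflect.
    unfold post_den_integrand. ring.
Qed.

Lemma int_R_posterior_num :
  int_R (fun th => th * laplace_pdf theta0 s0 th * cauchy_pdf 0 se (x - th))
  = theta0 * post_den s0 se (x - theta0) + post_num s0 se (x - theta0).
Proof.
  apply (int_R_dominated _ (fun u => / (PI * se) * (Rabs theta0 * laplace_pdf 0 s0 u
                                                    + u * laplace_pdf 0 s0 u)) theta0
           (/ (PI * se) * (Rabs theta0 * / 2 + s0 / 2))).
  - intros t. eapply continuous_ext;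
      [| apply (continuous_mult (fun th => th) _ t (continuous_id t) (continuous_laplace_cauchy t))].
    intros; simpl; unfold mult; simpl; ring.
  - apply is_RInt_pinfty_scal, is_RInt_pinfty_plus;
      [apply is_RInt_pinfty_scal, is_RInt_pinfty_laplace_pdf | apply is_RInt_pinfty_x_laplace_pdf];
      auto.
  - intros u Hu. rewrite !Rmult_assoc, laplace_cauchy_shift, laplace_cauchy_reflect.
    assert (Ht : Rabs (theta0 + u) <= Rabs theta0 + u /\ Rabs (theta0 - u) <= Rabs theta0 + u).
    { split; unfold Rminus; eapply Rle_trans; try apply Rabs_triang;
        rewrite ?Rabs_Ropp, (Rabs_right u); lra. }
    split; rewrite Rabs_mult; (eapply Rle_trans; [apply Rmult_le_compat;
      [apply Rabs_pos | apply Rabs_pos | apply Ht | apply Rabs_laplace_cauchy_le] |]); right; ring.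
  - apply (is_RInt_pinfty_ext 0 (fun u => theta0 * post_den_integrand s0 se (x - theta0) u
                                          + post_num_integrand s0 se (x - theta0) u)).
    + intros u _. rewrite !Rmult_assoc, laplace_cauchy_shift, laplace_cauchy_reflect.
      unfold post_den_integrand, post_num_integrand. ring.
    + apply is_RInt_pinfty_plus; [apply is_RInt_pinfty_scal, is_RInt_pinfty_post_den |
                                  apply is_RInt_pinfty_post_num]; auto.
Qed.

Lemma posterior_mean_eq :
  posterior_mean (laplace_pdf theta0 s0) (cauchy_pdf 0 se) x =
  theta0 + post_num s0 se (x - theta0) / post_den s0 se (x - theta0).
Proof.
  unfold posterior_mean. rewrite int_R_posterior_num, int_R_posterior_den.
  assert (H := post_den_pos s0 se Hs0 Hse (x - theta0)). field. lra.
Qed.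

End PosteriorMean.

Lemma is_derive_post_ratio (s0 se : R) : 0 < s0 -> 0 < se ->
  is_derive (fun y => post_num s0 se y / post_den s0 se y) 0
    (1 - se / s0 * (aux_g (se / s0) / aux_f (se / s0))).
Proof.
  intros Hs0 Hse. set (a := se / s0).
  assert (Ha : 0 < a) by (apply Rdiv_lt_0_compat; auto).
  destruct (aux_int_eq a Ha) as [Ef Eg].
  assert (Hf := aux_f_int_pos a Ha). assert (Hpi := PI_RGT_0).
  assert (E : RInt_pinfty 0 (post_dnum_integrand s0 se) / post_den s0 se 0
              = 1 - a * (aux_g a / aux_f a)).
  { rewrite RInt_pinfty_post_dnum_eq, post_den_0_eq by auto. fold a. rewrite <- Ef, <- Eg.
    field. split; lra. }
  rewrite <- E.
  apply is_derive_div_root; auto using post_num_0, is_derive_post_num, continuous_post_den_0.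
  apply Rgt_not_eq, post_den_pos; auto.
Qed.

Theorem mainTheorem8 (sigma0 sigmaeps theta0 : R) :
  0 < sigma0 -> 0 < sigmaeps ->
  let a := sigmaeps / sigma0 in
  is_derive (posterior_mean (laplace_pdf theta0 sigma0) (cauchy_pdf 0 sigmaeps))
    theta0
    (1 - a * ((PI / 2 * sin a - cos a * CosInt a - sin a * SinInt a) /
              (PI / 2 * cos a - cos a * SinInt a + sin a * CosInt a))).
Proof.
  intros Hs0 Hse a.
  assert (Hratio := is_derive_post_ratio sigma0 sigmaeps Hs0 Hse). fold a in Hratio.
  set (ratio := fun y => post_num sigma0 sigmaeps y / post_den sigma0 sigmaeps y) in *.
  apply (is_derive_ext (fun x => theta0 + ratio (x - theta0)));
    [intros x; symmetry; apply posterior_mean_eq; auto |].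
  replace (1 - a * _) with (0 + 1 * (1 - a * (aux_g a / aux_f a))) by (unfold aux_f, aux_g; ring).
  apply (is_derive_plus (fun _ => theta0)); [auto_derive; auto |].
  apply (is_derive_comp ratio (fun x => x - theta0)); [| auto_derive; auto; ring].
  now rewrite Rminus_diag.
Qed.
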